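(* Let $p\in(0,1]$ and let $\bar Q=(\bar q_{j,k})_{j,k\geq1}$ be the generator on $\mathbb N=\{1,2,\dots\}$ with $\bar q_{j,k}=\binom{j-1}{k-1}p^k(1-p)^{j-k}$ for $1\leq k\leq j-1$, $\bar q_{j,j+1}=(j+1)p$, $\bar q_{j,j}=p^j-(2+j)p$, and $\bar q_{j,k}=0$ otherwise. Let $q>0$. \begin{enumerate} \item If $-1+q+p^q<0$, then $\bar Q$ is positive recurrent and its stationary distribution has a finite $q$th moment. \item If $p^q=1-q$, $p<e^{-1}$ and $r>0$, then $\bar Q$ is positive recurrent and a random variable $X$ with its stationary distribution satisfies $\mathbb E\big(X^q(\log(X+1))^{-(r+1)}\big)<\infty$. \end{enumerate} *)

From Stdlib Require Import Reals Lra Lia Arith Relations.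
From Coquelicot Require Import Coquelicot.
Open Scope R_scope.

(** States: the state space N = {1,2,...} of the paper is encoded by nat,
    state [n : nat] standing for the paper's state [j = n+1]. *)

(** Sum of a (nonnegative) real series, as a value in Rbar
    (limit of partial sums; for nonnegative terms it always exists in [0,+oo]). *)
Definition psum (f : nat -> R) : Rbar := Lim_seq (sum_n f).

Definition qout (Q : nat -> nat -> R) (i : nat) : R := - Q i i.

Definition Pi (Q : nat -> nat -> R) (i k : nat) : R :=
  if Req_EM_T (qout Q i) 0 then (if Nat.eqb i k then 1 else 0)
  else (if Nat.eqb i k then 0 else Q i k / qout Q i).

(** Taboo probabilities of the jump chain started at i:
    [taboo Q i n y] = P_i(Y_{n+1} = y, Y_1 <> i, ..., Y_n <> i). *)
Fixpoint taboo (Q : nat -> nat -> R) (i : nat) (n : nat) (y : nat) : R :=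
  match n with
  | O => Pi Q i y
  | S m => real (psum (fun z => if Nat.eqb z i then 0 else taboo Q i m z * Pi Q z y))
  end.

Definition return_prob (Q : nat -> nat -> R) (i : nat) : Rbar :=
  psum (fun n => taboo Q i n i).

(** Expected time spent (holding times) in the (n+2)-th visited state
    before the first return to i, restricted to the event of no return yet. *)
Definition exp_hold (Q : nat -> nat -> R) (i n : nat) : Rbar :=
  psum (fun z => if Nat.eqb z i then 0 else taboo Q i n z / qout Q z).

(** State i is positive recurrent for the (minimal) continuous-time chain
    with generator Q: the chain leaves i, returns to i almost surely (in
    finitely many jumps, hence without explosion), and the expected return
    time  m_i = 1/q_i + sum_n sum_{z<>i} P_i(Y_{n+1}=z, no return yet)/q_z
    is finite. *)
Definition pos_rec_state (Q : nat -> nat -> R) (i : nat) : Prop :=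
  0 < qout Q i /\
  return_prob Q i = Finite 1 /\
  (forall n, Rbar_lt (exp_hold Q i n) p_infty) /\
  Rbar_lt (psum (fun n => real (exp_hold Q i n))) p_infty.

Definition edge (Q : nat -> nat -> R) (a b : nat) : Prop := a <> b /\ 0 < Q a b.

Definition irreducible (Q : nat -> nat -> R) : Prop :=
  forall i k, clos_refl_trans nat (edge Q) i k.

Definition positive_recurrent (Q : nat -> nat -> R) : Prop :=
  irreducible Q /\ forall i, pos_rec_state Q i.

(** Stationary (invariant) distribution: a probability vector pi with
    pi Q = 0, written as global balance
    sum_{j <> k} pi_j q_{j,k} = pi_k q_k  for every k. *)
Definition stationary (Q : nat -> nat -> R) (pi : nat -> R) : Prop :=
  (forall j, 0 <= pi j) /\
  psum pi = Finite 1 /\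
  (forall k, psum (fun j => if Nat.eqb j k then 0 else pi j * Q j k)
             = Finite (pi k * qout Q k)).

(** The generator \bar Q of the paper, with state n <-> j = n+1,
    state m <-> k = m+1:
    - k <= j-1 :  binom(j-1,k-1) p^k (1-p)^(j-k) = C n m p^(m+1) (1-p)^(n-m)
    - k = j+1  :  (j+1) p = (n+2) p
    - k = j    :  p^j - (2+j) p = p^(n+1) - (n+3) p
    - otherwise 0. *)
Definition qbar (p : R) (n m : nat) : R :=
  if Nat.ltb m n then Binomial.C n m * p ^ (S m) * (1 - p) ^ (n - m)
  else if Nat.eqb m (S n) then INR (n + 2) * p
  else if Nat.eqb m n then p ^ (S n) - INR (n + 3) * p
  else 0.

(** E(X^q) for X distributed as pi (X = n+1 on state n). *)
Definition moment (pi : nat -> R) (q : R) : Rbar :=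
  psum (fun n => pi n * Rpower (INR (S n)) q).

Definition log_moment (pi : nat -> R) (q r : R) : Rbar :=
  psum (fun n => pi n * (Rpower (INR (S n)) q * Rpower (ln (INR (S n) + 1)) (- (r + 1)))).

From Stdlib Require Import Reals Lra Lia Relations.
From Coquelicot Require Import Coquelicot.
Open Scope R_scope.

(* Foster-Lyapunov drift.  For [0 < s <= 1] and [F j = (j+1)^s], concavity of [x^s] and
   Jensen's inequality for the binomial down-jumps give
     [drift F j <= p ((s + p^s - 1) F j + s + 1)].
   If [s + p^s < 1], [F] plus bounded corrections has drift [<= -1] off any given state [i].
   Along the jump chain started at [i] this is a supermartingale inequality for the taboo
   probabilities: the expected excursion length is finite and the chain returns to [i] almost
   surely, so [qbar p] is positive recurrent, and the expected numbers of visits during an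
   excursion, divided by the jump rates, normalize to a stationary distribution.  For any
   stationary [pi], testing [pi Q = 0] against truncations of [F] turns the drift bound into
   [sum_j pi_j (1 - s - p^s) F j <= s + 1].
   In the critical case [p^q = 1 - q] the exponent [q/2] is subcritical, which gives
   recurrence.  For the moment one uses [F j = X^q (ln X + c)^(-r)], [X = j + 1], whose drift
   is at most [C - p r kappa / 2 X^q (ln X + c)^(-r-1)] with [kappa = 1 - (1 - q) ln (1/p) > 0]
   for a large enough [c]. *)

(* Coquelicot states [sum_n] equalities in the carrier of an abelian monoid,
   where [ring] does not apply; [R_eq] retypes such a goal at [R]. *)
Ltac R_eq := match goal with |- @eq _ ?a ?b => change (@eq R a b) end.

Lemma sum_n_ge0 (a : nat -> R) n : (forall k, 0 <= a k) -> 0 <= sum_n a n.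
Proof.
  intros H; induction n as [|n IH]; [rewrite sum_O; auto|].
  rewrite sum_Sn; unfold plus; simpl; specialize (H (S n)); lra.
Qed.

Lemma sum_n_le_loc (a b : nat -> R) n :
  (forall k, (k <= n)%nat -> a k <= b k) -> sum_n a n <= sum_n b n.
Proof.
  intros H; induction n as [|n IH]; [rewrite !sum_O; auto|].
  rewrite !sum_Sn; unfold plus; simpl.
  assert (sum_n a n <= sum_n b n) by (apply IH; intros; apply H; lia).
  specialize (H (S n) (le_n _)); lra.
Qed.

Lemma sum_n_Rplus (a b : nat -> R) n : sum_n (fun k => a k + b k) n = sum_n a n + sum_n b n.
Proof. apply (sum_n_plus a b n). Qed.

Lemma sum_n_Rscal (c : R) (a : nat -> R) n : sum_n (fun k => c * a k) n = c * sum_n a n.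
Proof. apply (sum_n_scal_l c a n). Qed.

Lemma sum_n_Rminus (a b : nat -> R) n : sum_n (fun k => a k - b k) n = sum_n a n - sum_n b n.
Proof.
  replace (sum_n a n - sum_n b n) with (sum_n a n + (-1) * sum_n b n) by ring.
  rewrite <- sum_n_Rscal, <- sum_n_Rplus. apply sum_n_ext; intros k; R_eq; ring.
Qed.

Lemma sum_n_zero n : sum_n (fun _ => 0) n = 0.
Proof. rewrite sum_n_const; R_eq; ring. Qed.

Lemma sum_n_shift (a : nat -> R) n : sum_n a (S n) = a 0%nat + sum_n (fun k => a (S k)) n.
Proof.
  induction n as [|n IH]; [rewrite sum_Sn, !sum_O; reflexivity|].
  rewrite sum_Sn, IH, sum_Sn; unfold plus; simpl; ring.
Qed.

Lemma sum_n_single (k : nat) (c : R) n :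
  sum_n (fun m => if Nat.eqb m k then c else 0) n = if Nat.leb k n then c else 0.
Proof.
  induction n as [|n IH]; [rewrite sum_O; destruct k; reflexivity|].
  rewrite sum_Sn, IH.
  destruct (Nat.leb_spec k n), (Nat.leb_spec k (S n)), (Nat.eqb_spec (S n) k);
    try lia; unfold plus; simpl; lra.
Qed.

Lemma sum_n_nondecr (a : nat -> R) n m :
  (forall k, 0 <= a k) -> (n <= m)%nat -> sum_n a n <= sum_n a m.
Proof.
  intros H Hnm; induction Hnm as [|m _ IH]; [lra|].
  rewrite sum_Sn; unfold plus; simpl; specialize (H (S m)); lra.
Qed.

Lemma sum_n_vanishing_tail (a : nat -> R) n m :
  (forall k, (n < k)%nat -> a k = 0) -> (n <= m)%nat -> sum_n a m = sum_n a n.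
Proof.
  intros H Hnm; induction Hnm as [|m Hnm IH]; [reflexivity|].
  rewrite sum_Sn, IH, H by lia; unfold plus; simpl; R_eq; ring.
Qed.

Lemma is_series_Rplus (a b : nat -> R) la lb :
  is_series a la -> is_series b lb -> is_series (fun n => a n + b n) (la + lb).
Proof. intros; apply (is_series_plus a b la lb); auto. Qed.

Lemma is_series_Rscal (c : R) (a : nat -> R) l :
  is_series a l -> is_series (fun n => c * a n) (c * l).
Proof. intros; apply (is_series_scal c a l); auto. Qed.

Lemma is_series_Rminus (a b : nat -> R) la lb :
  is_series a la -> is_series b lb -> is_series (fun n => a n - b n) (la - lb).
Proof.
  intros Ha Hb. apply (is_series_ext (fun n => a n + (-1) * b n)); [intros; R_eq; ring|].
  replace (la - lb) with (la + (-1) * lb) by ring.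
  apply is_series_Rplus, is_series_Rscal; assumption.
Qed.

Lemma is_series_finite_support (a : nat -> R) N :
  (forall k, (N < k)%nat -> a k = 0) -> is_series a (sum_n a N).
Proof.
  intros H. change (is_lim_seq (sum_n a) (sum_n a N)).
  apply is_lim_seq_spec; intros eps. exists N; intros n Hn.
  rewrite (sum_n_vanishing_tail a N n H Hn), Rminus_eq_0, Rabs_R0. apply cond_pos.
Qed.

Lemma is_series_single (k : nat) (c : R) : is_series (fun n => if Nat.eqb n k then c else 0) c.
Proof.
  assert (H := is_series_finite_support (fun n => if Nat.eqb n k then c else 0) k).
  rewrite sum_n_single, Nat.leb_refl in H. apply H.
  intros n Hn; destruct (Nat.eqb_spec n k); [lia|reflexivity].
Qed.

Lemma is_series_zero : is_series (fun _ : nat => 0) 0.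
Proof.
  assert (H := is_series_finite_support (fun _ => 0) 0 (fun _ _ => eq_refl)).
  rewrite sum_O in H; exact H.
Qed.

Lemma is_series_set_term (a : nat -> R) l k c : is_series a l ->
  is_series (fun n => if Nat.eqb n k then c else a n) (l - a k + c).
Proof.
  intros H. eapply is_series_ext.
  2: apply is_series_Rplus; [apply is_series_Rminus; [apply H | apply (is_series_single k (a k))]
                              | apply (is_series_single k c)].
  intros n; simpl; destruct (Nat.eqb_spec n k); subst; ring.
Qed.

Lemma is_series_sum_n (a : nat -> nat -> R) (A : nat -> R) N :
  (forall y, (y <= N)%nat -> is_series (fun z => a z y) (A y)) ->
  is_series (fun z => sum_n (fun y => a z y) N) (sum_n A N).
Proof.
  induction N as [|N IH]; intros H.
  - rewrite sum_O. eapply is_series_ext; [|apply H; auto]. intros; rewrite sum_O; auto.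
  - rewrite sum_Sn. eapply is_series_ext.
    2: apply is_series_Rplus; [apply IH; intros; apply H; lia | apply (H (S N)); lia].
    intros; rewrite sum_Sn; auto.
Qed.

Lemma psum_is_series (a : nat -> R) l : is_series a l -> psum a = Finite l.
Proof. intros H. apply is_lim_seq_unique, H. Qed.

Section NonnegSeries.
Variable a : nat -> R.
Hypothesis a_ge0 : forall k, 0 <= a k.

Lemma is_series_sum_n_le l n : is_series a l -> sum_n a n <= l.
Proof.
  intros Hs. apply (is_lim_seq_incr_compare (sum_n a) l); [exact Hs|].
  intros m; apply sum_n_nondecr; auto.
Qed.

Lemma is_series_ge0 l : is_series a l -> 0 <= l.
Proof.
  intros Hs. apply Rle_trans with (sum_n a 0); [apply sum_n_ge0; auto|].
  apply is_series_sum_n_le; auto.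
Qed.

Lemma is_series_term_le l n : is_series a l -> a n <= l.
Proof.
  intros Hs. apply Rle_trans with (sum_n a n); [|apply is_series_sum_n_le; auto].
  destruct n; [rewrite sum_O; lra|].
  rewrite sum_Sn; unfold plus; simpl.
  assert (0 <= sum_n a n) by (apply sum_n_ge0; auto); lra.
Qed.

Lemma is_series_bounded_sum_n M :
  (forall n, sum_n a n <= M) -> exists l, is_series a l /\ l <= M.
Proof.
  intros HM.
  assert (Hex : ex_lim_seq (sum_n a))
    by (apply ex_lim_seq_incr; intros; apply sum_n_nondecr; auto).
  assert (Hle : Rbar_le (Lim_seq (sum_n a)) M).
  { apply (is_lim_seq_le (sum_n a) (fun _ => M)); auto.
    - apply Lim_seq_correct; auto.
    - apply is_lim_seq_const. }
  assert (Hge : Rbar_le (sum_n a 0) (Lim_seq (sum_n a))).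
  { apply (is_lim_seq_le (fun _ => sum_n a 0) (sum_n a)).
    - intros; apply sum_n_nondecr; auto; lia.
    - apply is_lim_seq_const.
    - apply Lim_seq_correct; auto. }
  assert (Hc := Lim_seq_correct _ Hex).
  destruct (Lim_seq (sum_n a)) as [l| |]; simpl in Hle, Hge; try contradiction.
  exists l; split; auto.
Qed.

Lemma is_series_psum l : psum a = Finite l -> is_series a l.
Proof.
  intros Hp. unfold psum in Hp.
  assert (Hc := Lim_seq_correct (sum_n a)
                  ltac:(apply ex_lim_seq_incr; intros; apply sum_n_nondecr; auto)).
  rewrite Hp in Hc; exact Hc.
Qed.

Lemma psum_lt_p_infty M : (forall n, sum_n a n <= M) -> Rbar_lt (psum a) p_infty.
Proof.
  intros HM. destruct (is_series_bounded_sum_n M HM) as [l [Hl _]].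
  rewrite (psum_is_series a l Hl). exact I.
Qed.

End NonnegSeries.

Lemma psum_ext (f g : nat -> R) : (forall n, f n = g n) -> psum f = psum g.
Proof. intros H. unfold psum. apply Lim_seq_ext; intros n. apply sum_n_ext, H. Qed.

Lemma is_series_le_ub (a : nat -> R) l M : is_series a l -> (forall n, sum_n a n <= M) -> l <= M.
Proof.
  intros Hs HM.
  exact (is_lim_seq_le (sum_n a) (fun _ => M) l M HM Hs (is_lim_seq_const M)).
Qed.

Lemma is_series_le (a b : nat -> R) la lb :
  (forall k, a k <= b k) -> is_series a la -> is_series b lb -> la <= lb.
Proof.
  intros H Ha Hb.
  apply (is_lim_seq_le (sum_n a) (sum_n b) la lb); auto.
  intros n; apply sum_n_le_loc; auto.
Qed.

Lemma is_series_dominated (a b : nat -> R) lb :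
  (forall k, 0 <= a k <= b k) -> is_series b lb -> exists la, is_series a la /\ la <= lb.
Proof.
  intros H Hb. apply is_series_bounded_sum_n; [intros k; apply H|].
  intros n. apply Rle_trans with (sum_n b n); [apply sum_n_le_loc; intros; apply H|].
  apply is_series_sum_n_le; auto. intros k; specialize (H k); lra.
Qed.

Lemma tonelli (a : nat -> nat -> R) (A : nat -> R) S :
  (forall z y, 0 <= a z y) -> (forall z, is_series (a z) (A z)) -> is_series A S ->
  (forall y, ex_series (fun z => a z y)) /\ is_series (fun y => Series (fun z => a z y)) S.
Proof.
  intros Hnn HA HS.
  assert (HAnn : forall z, 0 <= A z) by (intros z; apply (is_series_ge0 (a z)); auto).
  assert (Hcol : forall y, ex_series (fun z => a z y)).
  { intros y. destruct (is_series_bounded_sum_n (fun z => a z y) (fun z => Hnn z y) S)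
      as [l [Hl _]]; [|exists l; exact Hl].
    intros n. apply Rle_trans with (sum_n A n).
    - apply sum_n_le_loc; intros; apply (is_series_term_le (a k)); auto.
    - apply is_series_sum_n_le; auto. }
  split; auto.
  set (B := fun y => Series (fun z => a z y)).
  assert (HB : forall y, is_series (fun z => a z y) (B y)) by (intros; apply Series_correct; auto).
  assert (HBnn : forall y, 0 <= B y) by (intros y; apply (is_series_ge0 (fun z => a z y)); auto).
  destruct (is_series_bounded_sum_n B HBnn S) as [l [Hl HlS]].
  { intros Y. apply (is_series_le_ub _ _ _ (is_series_sum_n a B Y (fun y _ => HB y))).
    intros n. apply Rle_trans with (sum_n A n).
    - apply sum_n_le_loc; intros z _; apply is_series_sum_n_le; auto.
    - apply is_series_sum_n_le; auto. }
  assert (HSl : S <= l).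
  { apply (is_series_le_ub A S l HS). intros n.
    apply (is_series_le_ub _ _ _ (is_series_sum_n (fun y z => a z y) A n (fun z _ => HA z))).
    intros Y. apply Rle_trans with (sum_n B Y).
    - apply sum_n_le_loc; intros y _. apply (is_series_sum_n_le (fun z => a z y)); auto.
    - apply is_series_sum_n_le; auto. }
  replace S with l by lra. exact Hl.
Qed.

(** * The generator [qbar p] *)

Section Generator.
Variable p : R.
Hypothesis p_gt0 : 0 < p.
Hypothesis p_lt1 : p < 1.

Definition binom_w (j m : nat) : R := Binomial.C j m * p ^ m * (1 - p) ^ (j - m).

Lemma binom_w_ge0 j m : 0 <= binom_w j m.
Proof.
  unfold binom_w, Binomial.C. repeat apply Rmult_le_pos; try (apply pow_le; lra).
  - apply pos_INR.
  - left; apply Rinv_0_lt_compat, Rmult_lt_0_compat; apply INR_fact_lt_0.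
Qed.

Lemma binom_w_sum j : sum_n (binom_w j) j = 1.
Proof.
  rewrite sum_n_Reals. unfold binom_w. rewrite <- binomial.
  replace (p + (1 - p)) with 1 by ring. apply pow1.
Qed.

Lemma C_SS_mul j m : (m <= j)%nat ->
  Binomial.C (S j) (S m) * INR (S m) = INR (S j) * Binomial.C j m.
Proof.
  intros H. unfold Binomial.C. replace (S j - S m)%nat with (j - m)%nat by lia.
  rewrite !fact_simpl, !mult_INR.
  assert (INR (S m) <> 0) by (apply not_0_INR; lia).
  assert (H1 := INR_fact_neq_0 m). assert (H2 := INR_fact_neq_0 (j - m)).
  field; auto.
Qed.

Lemma binom_w_mean j : sum_n (fun m => binom_w j m * INR m) j = INR j * p.
Proof.
  destruct j as [|j]; [rewrite sum_O; simpl; ring|].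
  rewrite sum_n_shift. simpl INR at 1. rewrite Rmult_0_r, Rplus_0_l.
  transitivity (sum_n (fun m => (INR (S j) * p) * binom_w j m) j).
  - apply sum_n_ext_loc. intros m Hm. unfold binom_w.
    replace (S j - S m)%nat with (j - m)%nat by lia.
    replace (Binomial.C (S j) (S m) * p ^ S m * (1 - p) ^ (j - m) * INR (S m))
      with ((Binomial.C (S j) (S m) * INR (S m)) * p ^ S m * (1 - p) ^ (j - m)) by ring.
    rewrite C_SS_mul by lia. simpl. ring.
  - rewrite sum_n_Rscal, binom_w_sum. R_eq; ring.
Qed.

Lemma binom_w_mean_S j : sum_n (fun m => binom_w j m * (INR m + 1)) j = INR j * p + 1.
Proof.
  rewrite (sum_n_ext _ (fun m => binom_w j m * INR m + binom_w j m)) by (intros; R_eq; ring).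
  rewrite sum_n_Rplus, binom_w_mean, binom_w_sum. R_eq; ring.
Qed.

Lemma binom_w_diag j : binom_w j j = p ^ j.
Proof.
  unfold binom_w, Binomial.C. rewrite Nat.sub_diag. simpl.
  field. apply INR_fact_neq_0.
Qed.

Lemma binom_w_0 j : binom_w j 0 = (1 - p) ^ j.
Proof.
  unfold binom_w, Binomial.C. rewrite Nat.sub_0_r. simpl.
  field. apply INR_fact_neq_0.
Qed.

Lemma binom_w_jensen (phi : R -> R) (g : nat -> R) a d j :
  (forall m, (m <= j)%nat -> phi (g m) <= phi a + d * (g m - a)) ->
  sum_n (fun m => binom_w j m * phi (g m)) j
    <= phi a + d * (sum_n (fun m => binom_w j m * g m) j - a).
Proof.
  intros H.
  apply Rle_trans with (sum_n (fun m => (phi a - d * a) * binom_w j m + d * (binom_w j m * g m)) j).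
  - apply sum_n_le_loc. intros m Hm. specialize (H m Hm).
    assert (0 <= binom_w j m) by apply binom_w_ge0. nra.
  - rewrite sum_n_Rplus, !sum_n_Rscal, binom_w_sum. lra.
Qed.

Notation Q := (qbar p).

Lemma qbar_lt j m : (m < j)%nat -> Q j m = p * binom_w j m.
Proof. intros H. unfold qbar, binom_w. destruct (Nat.ltb_spec m j); [simpl; ring|lia]. Qed.

Lemma qbar_up j : Q j (S j) = INR (j + 2) * p.
Proof. unfold qbar. destruct (Nat.ltb_spec (S j) j); [lia|]. rewrite Nat.eqb_refl. auto. Qed.

Lemma qbar_diag j : Q j j = p ^ (S j) - INR (j + 3) * p.
Proof.
  unfold qbar. destruct (Nat.ltb_spec j j); [lia|].
  destruct (Nat.eqb_spec j (S j)); [lia|]. rewrite Nat.eqb_refl. auto.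
Qed.

Lemma qbar_far j k : (S j < k)%nat -> Q j k = 0.
Proof.
  intros H. unfold qbar. destruct (Nat.ltb_spec k j); [lia|].
  destruct (Nat.eqb_spec k (S j)); [lia|]. destruct (Nat.eqb_spec k j); [lia|]. auto.
Qed.

Lemma qbar_offdiag_ge0 j k : j <> k -> 0 <= Q j k.
Proof.
  intros H. destruct (Nat.lt_ge_cases k j).
  - rewrite qbar_lt by auto. apply Rmult_le_pos; [lra|apply binom_w_ge0].
  - destruct (Nat.eq_dec k (S j)) as [->|].
    + rewrite qbar_up. apply Rmult_le_pos; [apply pos_INR|lra].
    + rewrite qbar_far by lia. lra.
Qed.

Lemma qbar_row_sum j : sum_n (Q j) (S j) = 0.
Proof.
  rewrite sum_Sn, qbar_up.
  rewrite (sum_n_ext_loc _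
    (fun k => p * binom_w j k + (if Nat.eqb k j then Q j j - p * binom_w j j else 0))).
  2: { intros k Hk. R_eq. destruct (Nat.eqb_spec k j) as [->|]; [ring|].
       rewrite qbar_lt by lia. ring. }
  rewrite sum_n_Rplus, sum_n_Rscal, binom_w_sum, sum_n_single, Nat.leb_refl,
    qbar_diag, binom_w_diag.
  unfold plus; simpl. R_eq. rewrite !plus_INR. simpl. ring.
Qed.

Lemma qbar_irreducible : irreducible Q.
Proof.
  intros i k. destruct (Nat.le_gt_cases i k) as [Hik|Hki].
  - induction Hik as [|k _ IH]; [apply rt_refl|].
    apply rt_trans with k; [exact IH|]. apply rt_step; split; [lia|].
    rewrite qbar_up. apply Rmult_lt_0_compat; [apply lt_0_INR; lia|lra].
  - apply rt_step; split; [lia|]. rewrite qbar_lt by auto.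
    unfold binom_w, Binomial.C. repeat apply Rmult_lt_0_compat; try (apply pow_lt; lra); try lra.
    + apply INR_fact_lt_0.
    + apply Rinv_0_lt_compat, Rmult_lt_0_compat; apply INR_fact_lt_0.
Qed.

Definition rate (j : nat) : R := INR (j + 3) * p - p ^ (S j).

Lemma qout_qbar j : qout Q j = rate j.
Proof. unfold qout, rate. rewrite qbar_diag. ring. Qed.

Lemma pow_S_le j : p ^ (S j) <= p.
Proof.
  assert (p ^ j <= 1) by (rewrite <- (pow1 j); apply pow_incr; lra).
  assert (0 <= p ^ j) by (apply pow_le; lra).
  simpl; nra.
Qed.

Lemma rate_ge j : 2 * p <= rate j.
Proof.
  unfold rate. rewrite plus_INR. simpl INR.
  assert (0 <= INR j) by apply pos_INR. assert (Hp := pow_S_le j). nra.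
Qed.

Lemma rate_gt0 j : 0 < rate j.
Proof. assert (H := rate_ge j). lra. Qed.

Lemma rate_le j : rate j <= INR (j + 3) * p.
Proof. unfold rate. assert (0 <= p ^ S j) by (apply pow_le; lra). lra. Qed.

Definition drift (F : nat -> R) (j : nat) : R := sum_n (fun k => Q j k * (F k - F j)) (S j).

Lemma drift_split F j : drift F j =
  INR (j + 2) * p * (F (S j) - F j) + p * sum_n (fun m => binom_w j m * (F m - F j)) j.
Proof.
  unfold drift. rewrite sum_Sn, qbar_up. unfold plus; simpl.
  rewrite Rplus_comm. f_equal.
  rewrite <- sum_n_Rscal. apply sum_n_ext_loc. intros k Hk.
  destruct (Nat.eq_dec k j) as [->|]; [rewrite !Rminus_eq_0; R_eq; ring|].
  rewrite qbar_lt by lia. R_eq; ring.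
Qed.

Lemma drift_ext F G j : (forall k, (k <= S j)%nat -> F k = G k) -> drift F j = drift G j.
Proof. intros H. apply sum_n_ext_loc. intros k Hk. rewrite !H by lia. reflexivity. Qed.

Lemma drift_const c j : drift (fun _ => c) j = 0.
Proof. unfold drift. rewrite <- (sum_n_zero (S j)). apply sum_n_ext; intros; R_eq; ring. Qed.

Lemma drift_plus F G j : drift (fun k => F k + G k) j = drift F j + drift G j.
Proof. unfold drift. rewrite <- sum_n_Rplus. apply sum_n_ext; intros; R_eq; ring. Qed.

Lemma drift_scal a F j : drift (fun k => a * F k) j = a * drift F j.
Proof. unfold drift. rewrite <- sum_n_Rscal. apply sum_n_ext; intros; R_eq; ring. Qed.

Lemma drift_qbar_sum F j : drift F j = sum_n (fun k => Q j k * F k) (S j).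
Proof.
  unfold drift.
  rewrite (sum_n_ext _ (fun k => Q j k * F k - F j * Q j k)) by (intros; R_eq; ring).
  rewrite sum_n_Rminus, sum_n_Rscal, qbar_row_sum. R_eq; ring.
Qed.

Notation P := (Pi (qbar p)).

Lemma Pi_qbar j y : P j y = if Nat.eqb j y then 0 else Q j y / rate j.
Proof.
  unfold Pi. rewrite qout_qbar.
  destruct (Req_EM_T (rate j) 0) as [E|]; [|reflexivity].
  assert (H := rate_gt0 j). lra.
Qed.

Lemma Pi_qbar_ge0 j y : 0 <= P j y.
Proof.
  rewrite Pi_qbar. destruct (Nat.eqb_spec j y); [lra|].
  apply Rle_mult_inv_pos; [apply qbar_offdiag_ge0; auto|apply rate_gt0].
Qed.

Lemma Pi_qbar_far j y : (S j < y)%nat -> P j y = 0.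
Proof.
  intros H. rewrite Pi_qbar. destruct (Nat.eqb_spec j y); [lra|].
  rewrite qbar_far by auto. unfold Rdiv; ring.
Qed.

Lemma is_series_Pi_qbar_mean V j : is_series (fun y => P j y * V y) (V j + drift V j / rate j).
Proof.
  replace (V j + drift V j / rate j) with (sum_n (fun y => P j y * V y) (S j)).
  { apply is_series_finite_support. intros k Hk. rewrite Pi_qbar_far by auto. ring. }
  rewrite drift_qbar_sum.
  rewrite (sum_n_ext _ (fun k => / rate j * (Q j k * V k
                           + (if Nat.eqb k j then - (Q j j * V j) else 0)))).
  2: { intros k. rewrite Pi_qbar. R_eq.
       destruct (Nat.eqb_spec j k), (Nat.eqb_spec k j); subst; try lia; unfold Rdiv; ring. }
  rewrite sum_n_Rscal, sum_n_Rplus, sum_n_single.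
  destruct (Nat.leb_spec j (S j)); [|lia].
  assert (Hq := rate_gt0 j). rewrite qbar_diag. unfold rate in *. R_eq. field. lra.
Qed.

Lemma is_series_Pi_qbar_row j : is_series (P j) 1.
Proof.
  assert (H := is_series_Pi_qbar_mean (fun _ => 1) j).
  rewrite drift_const in H.
  eapply is_series_ext; [|replace 1 with (1 + 0 / rate j) by (unfold Rdiv; ring); exact H].
  intros; simpl; ring.
Qed.

End Generator.

(** * Positive recurrence from a Lyapunov function *)

Section LyapunovRecurrence.
Variable p : R.
Hypothesis p_gt0 : 0 < p.
Hypothesis p_lt1 : p < 1.
Variable i : nat.
Variable V : nat -> R.
Hypothesis V_ge0 : forall z, 0 <= V z.
Hypothesis drift_V : forall z, z <> i -> drift p V z <= -1.
Hypothesis V_unbounded : forall M, exists Z, forall z, (Z <= z)%nat -> M <= V z.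

Notation P := (Pi (qbar p)).
Notation rate := (rate p).

Let rate_gt0 := rate_gt0 p p_gt0 p_lt1.
Let P_ge0 := Pi_qbar_ge0 p p_gt0 p_lt1.

Lemma V_mean_ge0 z : 0 <= V z + drift p V z / rate z.
Proof.
  refine (is_series_ge0 _ _ _ (is_series_Pi_qbar_mean p p_gt0 p_lt1 V z)).
  intros y; apply Rmult_le_pos; auto.
Qed.

Definition tb n y := taboo (qbar p) i n y.
Definition tb_off n z := if Nat.eqb z i then 0 else tb n z.

Record tb_summable (n : nat) (M W : R) : Prop := {
  tb_ge0 : forall y, 0 <= tb n y;
  tb_mass : is_series (tb n) M;
  tb_Vmass : is_series (fun y => tb n y * V y) W }.

Section Step.
Variables (n : nat) (M W : R).
Hypothesis G : tb_summable n M W.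

Lemma tb_off_ge0 z : 0 <= tb_off n z.
Proof. unfold tb_off. destruct (Nat.eqb z i); [lra|apply G]. Qed.

Lemma is_series_tb_off : is_series (tb_off n) (M - tb n i).
Proof.
  eapply is_series_ext.
  2: { replace (M - tb n i) with (M - tb n i + 0) by ring.
       apply (is_series_set_term _ _ i 0 (tb_mass _ _ _ G)). }
  intros z. reflexivity.
Qed.

Lemma is_series_tb_off_V : is_series (fun z => tb_off n z * V z) (W - tb n i * V i).
Proof.
  eapply is_series_ext.
  2: { replace (W - tb n i * V i) with (W - tb n i * V i + 0) by ring.
       apply (is_series_set_term _ _ i 0 (tb_Vmass _ _ _ G)). }
  intros z. unfold tb_off. destruct (Nat.eqb z i); simpl; ring.
Qed.

Lemma ex_series_tb_off_rate : ex_series (fun z => tb_off n z / rate z).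
Proof.
  destruct (is_series_dominated (fun z => tb_off n z / rate z) (fun z => / (2 * p) * tb_off n z)
              (/ (2 * p) * (M - tb n i))) as [E [HE _]]; [|apply is_series_Rscal, is_series_tb_off|].
  - intros z. assert (H1 := tb_off_ge0 z). assert (H2 := rate_ge p p_gt0 p_lt1 z).
    assert (H3 := rate_gt0 z). split; [apply Rle_mult_inv_pos; auto|].
    unfold Rdiv. rewrite Rmult_comm. apply Rmult_le_compat_r; auto. apply Rinv_le_contravar; lra.
  - exists E; exact HE.
Qed.

Lemma is_series_tb_off_P z : is_series (fun y => tb_off n z * P z y) (tb_off n z).
Proof.
  assert (H := is_series_Rscal (tb_off n z) _ _ (is_series_Pi_qbar_row p p_gt0 p_lt1 z)).
  rewrite Rmult_1_r in H; exact H.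
Qed.

Lemma is_series_tb_S y : is_series (fun z => tb_off n z * P z y) (tb (S n) y).
Proof.
  destruct (tonelli (fun z y => tb_off n z * P z y) (tb_off n) (M - tb n i)) as [Hcol _].
  - intros; apply Rmult_le_pos; [apply tb_off_ge0|apply P_ge0].
  - apply is_series_tb_off_P.
  - apply is_series_tb_off.
  - replace (tb (S n) y) with (Series (fun z => tb_off n z * P z y)); [apply Series_correct; auto|].
    symmetry; unfold tb at 1; simpl.
    rewrite (psum_ext _ (fun z => tb_off n z * P z y)).
    + rewrite (psum_is_series _ _ (Series_correct _ (Hcol y))). reflexivity.
    + intros z. unfold tb_off, tb. destruct (Nat.eqb z i); ring.
Qed.

End Step.

Definition hold n := Series (fun z => tb_off n z / rate z).

Lemma is_series_hold n M W : tb_summable n M W -> is_series (fun z => tb_off n z / rate z) (hold n).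
Proof. intros G. apply Series_correct, (ex_series_tb_off_rate n M W G). Qed.

Lemma hold_ge0 n M W : tb_summable n M W -> 0 <= hold n.
Proof.
  intros G. refine (is_series_ge0 _ _ _ (is_series_hold n M W G)).
  intros z. apply Rle_mult_inv_pos; [apply (tb_off_ge0 n M W G)|apply rate_gt0].
Qed.

(* Off [i], [P V <= V - 1 / rate] because [drift V <= -1]. *)
Lemma tb_summable_S n M W : tb_summable n M W ->
  exists W', tb_summable (S n) (M - tb n i) W' /\ W' <= W - tb n i * V i - hold n.
Proof.
  intros G.
  assert (Hoff := tb_off_ge0 n M W G).
  assert (HS := is_series_tb_S n M W G).
  assert (Htb : forall y, tb (S n) y = Series (fun z => tb_off n z * P z y))
    by (intros y; symmetry; apply is_series_unique, HS).
  assert (Hnn : forall z y, 0 <= tb_off n z * P z y) by (intros; apply Rmult_le_pos; auto).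
  destruct (tonelli (fun z y => tb_off n z * P z y) (tb_off n) (M - tb n i)) as [_ Hmass];
    [exact Hnn | apply is_series_tb_off_P | apply (is_series_tb_off n M W G) |].
  destruct (is_series_dominated (fun z => tb_off n z * (V z + drift p V z / rate z))
              (fun z => tb_off n z * V z - tb_off n z / rate z) (W - tb n i * V i - hold n))
    as [W' [HW' HW'le]].
  { intros z. split.
    - apply Rmult_le_pos; [auto|apply V_mean_ge0].
    - unfold tb_off. destruct (Nat.eqb_spec z i) as [|Hz]; [lra|].
      assert (Hd := drift_V z Hz). assert (Hq := rate_gt0 z). assert (0 <= tb n z) by apply G.
      assert (drift p V z / rate z <= - / rate z).
      { unfold Rdiv. replace (- / rate z) with (-1 * / rate z) by ring.
        apply Rmult_le_compat_r; [left; apply Rinv_0_lt_compat|]; lra. }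
      unfold Rdiv in *. nra. }
  { apply is_series_Rminus; [apply (is_series_tb_off_V n M W G)|apply (is_series_hold n M W G)]. }
  destruct (tonelli (fun z y => tb_off n z * P z y * V y)
              (fun z => tb_off n z * (V z + drift p V z / rate z)) W') as [_ HVmass]; auto.
  { intros; apply Rmult_le_pos; auto. }
  { intros z. eapply is_series_ext.
    2: apply is_series_Rscal, (is_series_Pi_qbar_mean p p_gt0 p_lt1 V z).
    intros; simpl; ring. }
  exists W'. split; [|exact HW'le]. constructor.
  - intros y. exact (is_series_ge0 _ (fun z => Hnn z y) _ (HS y)).
  - eapply is_series_ext; [|exact Hmass]. intros y; simpl. rewrite Htb; reflexivity.
  - eapply is_series_ext; [|exact HVmass]. intros y; simpl. rewrite Htb, Series_scal_r. reflexivity.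
Qed.

Lemma tb_summable_0 : tb_summable 0 1 (V i + drift p V i / rate i).
Proof.
  constructor; unfold tb; simpl.
  - intros y; apply P_ge0.
  - apply is_series_Pi_qbar_row; auto.
  - apply is_series_Pi_qbar_mean; auto.
Qed.

Definition mass n := Series (tb n).
Definition Vmass n := Series (fun y => tb n y * V y).

Lemma tb_summable_all n : tb_summable n (mass n) (Vmass n).
Proof.
  assert (Hex : exists M W, tb_summable n M W).
  { induction n as [|n [M [W G]]]; [exists 1, (V i + drift p V i / rate i); apply tb_summable_0|].
    destruct (tb_summable_S n M W G) as [W' [G' _]]. exists (M - tb n i), W'; exact G'. }
  destruct Hex as [M [W G]]. unfold mass, Vmass.
  rewrite (is_series_unique _ _ (tb_mass _ _ _ G)), (is_series_unique _ _ (tb_Vmass _ _ _ G)).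
  exact G.
Qed.

Lemma mass_S n : mass (S n) = mass n - tb n i.
Proof.
  destruct (tb_summable_S n _ _ (tb_summable_all n)) as [W' [G _]].
  apply is_series_unique, (tb_mass _ _ _ G).
Qed.

Lemma Vmass_S_le n : Vmass (S n) + tb n i * V i + hold n <= Vmass n.
Proof.
  destruct (tb_summable_S n _ _ (tb_summable_all n)) as [W' [G H]].
  unfold Vmass at 1. rewrite (is_series_unique _ _ (tb_Vmass _ _ _ G)). lra.
Qed.

Lemma tb_ge0_all n y : 0 <= tb n y.
Proof. apply (tb_summable_all n). Qed.

Lemma tb_V_ge0 n : 0 <= tb n i * V i.
Proof. apply Rmult_le_pos; [apply tb_ge0_all|auto]. Qed.

Lemma mass_ge0 n : 0 <= mass n.
Proof. exact (is_series_ge0 _ (tb_ge0_all n) _ (tb_mass _ _ _ (tb_summable_all n))). Qed.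

Lemma Vmass_ge0 n : 0 <= Vmass n.
Proof.
  refine (is_series_ge0 _ _ _ (tb_Vmass _ _ _ (tb_summable_all n))).
  intros; apply Rmult_le_pos; [apply tb_ge0_all|auto].
Qed.

Lemma hold_ge0_all n : 0 <= hold n.
Proof. exact (hold_ge0 n _ _ (tb_summable_all n)). Qed.

Lemma Vmass_le_0 n : Vmass n <= Vmass 0.
Proof.
  induction n as [|n IH]; [lra|].
  assert (H := Vmass_S_le n). assert (H0 := tb_V_ge0 n). assert (H1 := hold_ge0_all n). lra.
Qed.

Lemma hold_summable : exists s, is_series hold s.
Proof.
  destruct (is_series_bounded_sum_n hold hold_ge0_all (Vmass 0)) as [s [Hs _]]; [|exists s; exact Hs].
  assert (Hsum : forall N, sum_n hold N + Vmass (S N) <= Vmass 0).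
  { induction N as [|N IH].
    - rewrite sum_O. assert (H := Vmass_S_le 0). assert (H0 := tb_V_ge0 0). lra.
    - rewrite sum_Sn; unfold plus; simpl.
      assert (H := Vmass_S_le (S N)). assert (H0 := tb_V_ge0 (S N)). lra. }
  intros N. assert (H := Hsum N). assert (H0 := Vmass_ge0 (S N)). lra.
Qed.

(* Below [Z] the rates are at most [(Z+3) p], so the mass there is bounded through the
   holding time; from [Z] on, [V >= Mv]. *)
Lemma mass_S_le Mv Z n : 0 < Mv -> (forall z, (Z <= z)%nat -> Mv <= V z) ->
  mass (S n) <= INR (Z + 3) * p * hold n + Vmass 0 / Mv.
Proof.
  intros HMv HZ. set (cZ := INR (Z + 3) * p).
  assert (HcZ : 0 < cZ) by (apply Rmult_lt_0_compat; [apply lt_0_INR; lia|lra]).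
  assert (G := tb_summable_all n).
  assert (Hoff := tb_off_ge0 n _ _ G).
  apply Rle_trans with (cZ * hold n + / Mv * (Vmass n - tb n i * V i)).
  2: { assert (H0 := tb_V_ge0 n). assert (H := Vmass_le_0 n).
       unfold Rdiv. rewrite (Rmult_comm (Vmass 0)).
       apply Rplus_le_compat_l, Rmult_le_compat_l; [left; apply Rinv_0_lt_compat|]; lra. }
  rewrite mass_S.
  apply (is_series_le (tb_off n) (fun z => cZ * (tb_off n z / rate z) + / Mv * (tb_off n z * V z))).
  - intros z. assert (Hz := Hoff z). assert (Hq := rate_gt0 z).
    assert (0 <= / Mv * (tb_off n z * V z))
      by (apply Rmult_le_pos; [left; apply Rinv_0_lt_compat|apply Rmult_le_pos]; auto).
    assert (0 <= cZ * (tb_off n z / rate z))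
      by (apply Rmult_le_pos; [lra|apply Rle_mult_inv_pos; auto]).
    destruct (Nat.lt_ge_cases z Z) as [HzZ|HzZ].
    + assert (rate z <= cZ).
      { apply Rle_trans with (INR (z + 3) * p); [apply rate_le; lra|].
        apply Rmult_le_compat_r; [lra|apply le_INR; lia]. }
      assert (tb_off n z <= cZ * (tb_off n z / rate z)).
      { unfold Rdiv. replace (tb_off n z) with (rate z * (tb_off n z * / rate z)) at 1 by (field; lra).
        apply Rmult_le_compat_r; [apply Rmult_le_pos; [|left; apply Rinv_0_lt_compat]|]; auto. }
      lra.
    + assert (tb_off n z <= / Mv * (tb_off n z * V z)).
      { replace (tb_off n z) with (/ Mv * (tb_off n z * Mv)) at 1 by (field; lra).
        apply Rmult_le_compat_l; [left; apply Rinv_0_lt_compat; auto|].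
        apply Rmult_le_compat_l; auto. }
      lra.
  - apply (is_series_tb_off n _ _ G).
  - apply is_series_Rplus; apply is_series_Rscal;
      [apply (is_series_hold n _ _ G)|apply (is_series_tb_off_V n _ _ G)].
Qed.

Lemma mass_cvg0 : is_lim_seq mass 0.
Proof.
  apply is_lim_seq_spec. intros eps. assert (He := cond_pos eps).
  destruct hold_summable as [s Hs].
  assert (Hhold := ex_series_lim_0 hold (ex_intro _ s Hs)). apply is_lim_seq_spec in Hhold.
  assert (HV0 := Vmass_ge0 0).
  set (Mv := 2 * (Vmass 0 + 1) / eps).
  assert (HMv : 0 < Mv) by (apply Rdiv_lt_0_compat; lra).
  destruct (V_unbounded Mv) as [Z HZ].
  set (cZ := INR (Z + 3) * p).
  assert (HcZ : 0 < cZ) by (apply Rmult_lt_0_compat; [apply lt_0_INR; lia|lra]).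
  assert (He2 : 0 < eps / (2 * cZ)) by (apply Rdiv_lt_0_compat; lra).
  destruct (Hhold (mkposreal _ He2)) as [N HN].
  exists (S N). intros [|n] Hn; [lia|].
  specialize (HN n ltac:(lia)). simpl in HN.
  rewrite Rminus_0_r, Rabs_pos_eq in HN by apply hold_ge0_all.
  rewrite Rminus_0_r, Rabs_pos_eq by apply mass_ge0.
  assert (H := mass_S_le Mv Z n HMv HZ). fold cZ in H.
  assert (cZ * hold n < eps / 2).
  { replace (eps / 2) with (cZ * (eps / (2 * cZ))) by (field; lra).
    apply Rmult_lt_compat_l; auto. }
  assert (Vmass 0 / Mv < eps / 2).
  { unfold Mv. replace (Vmass 0 / (2 * (Vmass 0 + 1) / eps)) with (eps / 2 * (Vmass 0 / (Vmass 0 + 1)))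
      by (field; lra).
    rewrite <- (Rmult_1_r (eps / 2)) at 2. apply Rmult_lt_compat_l; [lra|].
    apply (Rmult_lt_reg_r (Vmass 0 + 1)); [lra|]. unfold Rdiv. rewrite Rmult_assoc, Rinv_l; lra. }
  lra.
Qed.

Lemma is_series_return : is_series (fun n => tb n i) 1.
Proof.
  change (is_lim_seq (sum_n (fun n => tb n i)) 1).
  apply (is_lim_seq_ext (fun N => 1 - mass (S N))).
  - intros N. induction N as [|N IH].
    + rewrite sum_O, mass_S. unfold mass.
      rewrite (is_series_unique _ _ (tb_mass _ _ _ tb_summable_0)). R_eq; ring.
    + rewrite sum_Sn, <- IH, (mass_S (S N)). unfold plus; simpl. R_eq; ring.
  - replace (Finite 1) with (Finite (1 - 0)) by (f_equal; ring).
    apply is_lim_seq_minus'; [apply is_lim_seq_const|].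
    apply (is_lim_seq_incr_1 mass 0), mass_cvg0.
Qed.

Lemma exp_hold_qbar n : exp_hold (qbar p) i n = Finite (hold n).
Proof.
  unfold exp_hold. rewrite (psum_ext _ (fun z => tb_off n z / rate z)).
  - apply psum_is_series, (is_series_hold n _ _ (tb_summable_all n)).
  - intros z. unfold tb_off, tb. rewrite qout_qbar. destruct (Nat.eqb z i); unfold Rdiv; ring.
Qed.

Lemma pos_rec_state_of_lyapunov : pos_rec_state (qbar p) i.
Proof.
  split; [|split; [|split]].
  - rewrite qout_qbar. apply rate_gt0.
  - apply psum_is_series, is_series_return.
  - intros n. rewrite exp_hold_qbar. exact I.
  - destruct hold_summable as [s Hs].
    rewrite (psum_ext _ hold), (psum_is_series _ _ Hs); [exact I|].
    intros n. rewrite exp_hold_qbar. reflexivity.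
Qed.

(* Expected number of visits to [k] during an excursion from [i], which visits [i] once. *)
Definition visits k := if Nat.eqb k i then 1 else Series (fun n => tb n k).

Lemma tb_le_hold n k : k <> i -> tb n k <= rate k * hold n.
Proof.
  intros Hk. assert (Hq := rate_gt0 k). assert (G := tb_summable_all n).
  assert (H : tb_off n k / rate k <= hold n).
  { refine (is_series_term_le _ _ _ _ (is_series_hold n _ _ G)).
    intros z. apply Rle_mult_inv_pos; [apply (tb_off_ge0 n _ _ G)|apply rate_gt0]. }
  unfold tb_off in H. destruct (Nat.eqb_spec k i); [lia|].
  apply (Rmult_le_compat_l (rate k)) in H; [|lra].
  replace (rate k * (tb n k / rate k)) with (tb n k) in H by (field; lra). exact H.
Qed.

Lemma is_series_visits k : is_series (fun n => tb n k) (visits k).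
Proof.
  unfold visits. destruct (Nat.eqb_spec k i) as [->|Hk]; [apply is_series_return|].
  destruct hold_summable as [s Hs].
  destruct (is_series_dominated (fun n => tb n k) (fun n => rate k * hold n) (rate k * s))
    as [l [Hl _]].
  - intros n. split; [apply tb_ge0_all|apply tb_le_hold; auto].
  - apply is_series_Rscal, Hs.
  - rewrite (is_series_unique _ _ Hl). exact Hl.
Qed.

Lemma visits_ge0 k : 0 <= visits k.
Proof. exact (is_series_ge0 _ (fun n => tb_ge0_all n k) _ (is_series_visits k)). Qed.

(* Sum [tb (S n) k] over [n], split according to the state visited just before. *)
Lemma visits_balance k : is_series (fun j => visits j * P j k) (visits k).
Proof.
  assert (HA : is_series (fun n => tb (S n) k) (visits k - tb 0 k)).
  { assert (H := is_series_visits k).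
    replace (visits k) with (plus (visits k - tb 0 k) (tb 0 k)) in H by (unfold plus; simpl; ring).
    exact (is_series_incr_1 _ _ H). }
  destruct (tonelli (fun n j => tb_off n j * P j k) (fun n => tb (S n) k) (visits k - tb 0 k))
    as [_ Hsum]; auto.
  { intros; apply Rmult_le_pos; [apply (tb_off_ge0 _ _ _ (tb_summable_all _))|apply P_ge0]. }
  { intros n. apply (is_series_tb_S n _ _ (tb_summable_all n)). }
  assert (Hcol : forall j, Series (fun n => tb_off n j * P j k)
                             = (if Nat.eqb j i then 0 else visits j) * P j k).
  { intros j. unfold tb_off. destruct (Nat.eqb_spec j i).
    - rewrite (Series_ext _ (fun _ => 0)) by (intros; apply Rmult_0_l).
      rewrite (is_series_unique _ 0 is_series_zero). ring.
    - rewrite Series_scal_r. unfold visits. destruct (Nat.eqb_spec j i); [lia|reflexivity]. }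
  assert (H := is_series_set_term _ _ i (visits i * P i k) Hsum).
  eapply is_series_ext; [|replace (visits k) with
    (visits k - tb 0 k - Series (fun n => tb_off n i * P i k) + visits i * P i k); [exact H|]].
  - intros j. simpl. destruct (Nat.eqb_spec j i) as [->|]; [reflexivity|].
    rewrite Hcol. destruct (Nat.eqb_spec j i); [lia|reflexivity].
  - rewrite Hcol, Nat.eqb_refl. unfold visits; rewrite Nat.eqb_refl. unfold tb; simpl. ring.
Qed.

(* [m] is the expected return time to [i]. *)
Lemma is_series_visits_rate : exists m, 0 < m /\ is_series (fun k => visits k / rate k) m.
Proof.
  destruct hold_summable as [s Hs].
  destruct (tonelli (fun n k => tb_off n k / rate k) hold s) as [_ Hsum]; auto.
  { intros; apply Rle_mult_inv_pos; [apply (tb_off_ge0 _ _ _ (tb_summable_all _))|apply rate_gt0]. }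
  { intros n. apply (is_series_hold n _ _ (tb_summable_all n)). }
  assert (Hcol : forall k, Series (fun n => tb_off n k / rate k)
                             = if Nat.eqb k i then 0 else visits k / rate k).
  { intros k. unfold tb_off. destruct (Nat.eqb_spec k i).
    - rewrite (Series_ext _ (fun _ => 0)) by (intros; unfold Rdiv; apply Rmult_0_l).
      apply (is_series_unique _ 0 is_series_zero).
    - unfold Rdiv. rewrite Series_scal_r. unfold visits.
      destruct (Nat.eqb_spec k i); [lia|reflexivity]. }
  assert (H := is_series_set_term _ _ i (/ rate i) Hsum).
  assert (Hs0 : 0 <= s) by exact (is_series_ge0 _ hold_ge0_all _ Hs).
  assert (0 < / rate i) by (apply Rinv_0_lt_compat, rate_gt0).
  exists (s + / rate i). split; [lra|].
  eapply is_series_ext; [|replace (s + / rate i) with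
    (s - Series (fun n => tb_off n i / rate i) + / rate i); [exact H|]].
  - intros k. simpl. rewrite Hcol. unfold visits.
    destruct (Nat.eqb_spec k i) as [->|]; [unfold Rdiv; ring|reflexivity].
  - rewrite Hcol, Nat.eqb_refl. ring.
Qed.

Lemma stationary_of_lyapunov : exists pi, stationary (qbar p) pi.
Proof.
  destruct is_series_visits_rate as [m [Hm Hms]].
  exists (fun k => visits k / rate k / m). split; [|split].
  - intros j. apply Rle_mult_inv_pos; [|exact Hm].
    apply Rle_mult_inv_pos; [apply visits_ge0|apply rate_gt0].
  - apply psum_is_series. eapply is_series_ext.
    2: { replace 1 with (/ m * m) by (field; lra). apply is_series_Rscal, Hms. }
    intros; simpl. unfold Rdiv; ring.
  - intros k. apply psum_is_series. rewrite qout_qbar.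
    eapply is_series_ext.
    2: { replace (visits k / rate k / m * rate k) with (/ m * visits k)
           by (assert (Hq := rate_gt0 k); field; lra).
         apply is_series_Rscal, visits_balance. }
    intros j. simpl. rewrite Pi_qbar by auto.
    destruct (Nat.eqb_spec j k); [ring|]. assert (Hq := rate_gt0 j). field; lra.
Qed.

End LyapunovRecurrence.

(** * Drift bounds on stationary moments *)

Lemma is_series_sum_n_ge0_of_tail_le0 (a : nat -> R) N :
  is_series a 0 -> (forall j, (N < j)%nat -> a j <= 0) -> 0 <= sum_n a N.
Proof.
  intros Hs Ht.
  assert (Hle := is_lim_seq_le (sum_n a)
                  (fun n => if Nat.leb n N then sum_n a n else sum_n a N) 0 (sum_n a N)).
  simpl in Hle. apply Hle.
  - intros n. destruct (Nat.leb_spec n N) as [|HNn]; [lra|].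
    induction HNn as [|m Hm IH]; rewrite sum_Sn; unfold plus; simpl.
    + specialize (Ht (S N) ltac:(lia)); lra.
    + specialize (Ht (S m) ltac:(lia)); lra.
  - exact Hs.
  - apply is_lim_seq_spec. exists N. intros n Hn.
    destruct (Nat.leb_spec n N); [replace n with N by lia|];
      rewrite Rminus_eq_0, Rabs_R0; apply cond_pos.
Qed.

Section StationaryDrift.
Variable p : R.
Hypothesis p_gt0 : 0 < p.
Hypothesis p_lt1 : p < 1.
Notation Q := (qbar p).
Variable pi : nat -> R.
Hypothesis pi_stat : stationary Q pi.

Lemma stationary_ge0 j : 0 <= pi j.
Proof. apply pi_stat. Qed.

Lemma stationary_sum_n_le1 N : sum_n pi N <= 1.
Proof.
  destruct pi_stat as [Hnn [Hs _]].
  exact (is_series_sum_n_le _ Hnn _ N (is_series_psum _ Hnn _ Hs)).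
Qed.

Lemma is_series_stationary_col k : is_series (fun j => pi j * Q j k) 0.
Proof.
  destruct pi_stat as [Hnn [_ Hb]]. specialize (Hb k).
  apply is_series_psum in Hb.
  2: { intros j. destruct (Nat.eqb_spec j k); [lra|].
       apply Rmult_le_pos; [auto|apply qbar_offdiag_ge0; auto]. }
  assert (H := is_series_set_term _ _ k (pi k * Q k k) Hb).
  eapply is_series_ext; [|replace 0 with
    (pi k * qout Q k - (if Nat.eqb k k then 0 else pi k * Q k k) + pi k * Q k k)
    by (rewrite Nat.eqb_refl; unfold qout; ring); exact H].
  intros j. simpl. destruct (Nat.eqb_spec j k) as [->|]; reflexivity.
Qed.

Lemma is_series_stationary_finite_test (g : nat -> R) N :
  is_series (fun j => pi j * sum_n (fun k => Q j k * g k) N) 0.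
Proof.
  eapply is_series_ext.
  2: { rewrite <- (sum_n_zero N).
       apply (is_series_sum_n (fun j k => pi j * (Q j k * g k)) (fun _ => 0)).
       intros k _. assert (H := is_series_Rscal (g k) _ _ (is_series_stationary_col k)).
       rewrite Rmult_0_r in H. eapply is_series_ext; [|exact H]. intros; simpl; ring. }
  intros j; simpl. rewrite <- sum_n_Rscal. reflexivity.
Qed.

Variable F : nat -> R.
Hypothesis F_nondecr : forall k, F k <= F (S k).

Lemma F_le k m : (k <= m)%nat -> F k <= F m.
Proof. intros H; induction H as [|m _ IH]; [lra|eapply Rle_trans; eauto]. Qed.

Definition trunc (N k : nat) := F (Nat.min k N).

Lemma drift_trunc N j : drift p (trunc N) j = sum_n (fun k => Q j k * (trunc N k - F N)) N.
Proof.
  rewrite drift_qbar_sum.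
  replace (sum_n (fun k => Q j k * trunc N k) (S j))
    with (sum_n (fun k => Q j k * (trunc N k - F N)) (S j)).
  2: { rewrite (sum_n_ext _ (fun k => Q j k * trunc N k - F N * Q j k)) by (intros; R_eq; ring).
       rewrite sum_n_Rminus, sum_n_Rscal, qbar_row_sum. R_eq; ring. }
  destruct (Nat.le_ge_cases (S j) N).
  - symmetry. apply sum_n_vanishing_tail; auto. intros k Hk. rewrite qbar_far by auto. ring.
  - apply sum_n_vanishing_tail; auto. intros k Hk. unfold trunc. rewrite Nat.min_r by lia. ring.
Qed.

Lemma is_series_stationary_drift_trunc N : is_series (fun j => pi j * drift p (trunc N) j) 0.
Proof.
  eapply is_series_ext; [|apply (is_series_stationary_finite_test (fun k => trunc N k - F N) N)].
  intros j; simpl. rewrite drift_trunc. reflexivity.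
Qed.

Lemma drift_trunc_below N j : (j < N)%nat -> drift p (trunc N) j = drift p F j.
Proof. intros H. apply drift_ext. intros k Hk. unfold trunc. rewrite Nat.min_l by lia. reflexivity. Qed.

Lemma drift_trunc_above N j : (N <= j)%nat -> drift p (trunc N) j <= 0.
Proof.
  intros H. unfold drift. rewrite <- (sum_n_zero (S j)). apply sum_n_le_loc. intros k Hk.
  destruct (Nat.eq_dec k j) as [->|]; [rewrite Rminus_eq_0; lra|].
  assert (trunc N k <= trunc N j) by (unfold trunc; rewrite (Nat.min_r j) by lia; apply F_le; lia).
  assert (0 <= Q j k) by (apply qbar_offdiag_ge0; auto). nra.
Qed.

(* [pi (drift F) = 0] may fail for unbounded [F]; it holds for the truncations [trunc N], whose
   drift is [<= 0] from [N] on. *)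
Lemma stationary_drift_bound K wv :
  0 <= K -> (forall j, drift p F j <= K - wv j) -> forall N, sum_n (fun j => pi j * wv j) N <= K.
Proof.
  intros HK Hdrift N.
  assert (H0 : 0 <= sum_n (fun j => pi j * drift p (trunc (S N)) j) N).
  { apply is_series_sum_n_ge0_of_tail_le0; [apply is_series_stationary_drift_trunc|].
    intros j Hj. apply Rmult_le_0_l; [apply stationary_ge0|apply drift_trunc_above; lia]. }
  assert (H1 : sum_n (fun j => pi j * drift p (trunc (S N)) j) N
               <= sum_n (fun j => K * pi j - pi j * wv j) N).
  { apply sum_n_le_loc. intros j Hj. rewrite drift_trunc_below by lia.
    specialize (Hdrift j). assert (0 <= pi j) by apply stationary_ge0. nra. }
  rewrite sum_n_Rminus, sum_n_Rscal in H1. assert (Hp := stationary_sum_n_le1 N).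
  assert (K * sum_n pi N <= K) by (rewrite <- (Rmult_1_r K) at 2; apply Rmult_le_compat_l; auto).
  lra.
Qed.

End StationaryDrift.

Lemma concave_tangent_le (f f' : R -> R) A :
  (forall x, A < x -> derivable_pt_lim f x (f' x)) ->
  (forall x y, A < x -> x <= y -> f' y <= f' x) ->
  forall a x, A < a -> A < x -> f x <= f a + f' a * (x - a).
Proof.
  intros Hd Hm a x Ha Hx. destruct (Rtotal_order a x) as [H|[H|H]]; [| subst; lra |].
  - destruct (MVT_cor2 f f' a x H) as [c [Hc Hc2]]; [intros; apply Hd; lra|].
    assert (f' c <= f' a) by (apply Hm; lra). nra.
  - destruct (MVT_cor2 f f' x a H) as [c [Hc Hc2]]; [intros; apply Hd; lra|].
    assert (f' a <= f' c) by (apply Hm; lra). nra.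
Qed.

Lemma nonincreasing_of_derive_le0 (f f' : R -> R) A :
  (forall x, A < x -> derivable_pt_lim f x (f' x)) ->
  (forall x, A < x -> f' x <= 0) ->
  forall x y, A < x -> x <= y -> f y <= f x.
Proof.
  intros Hd Hn x y Hx Hxy. destruct (Rle_lt_or_eq_dec _ _ Hxy) as [Hlt|Heq]; [|subst; lra].
  destruct (MVT_cor2 f f' x y Hlt) as [c [Hc Hc2]]; [intros; apply Hd; lra|].
  assert (f' c <= 0) by (apply Hn; lra). nra.
Qed.

Lemma Rpower_gt0 x s : 0 < Rpower x s.
Proof. apply exp_pos. Qed.

Lemma Rpower_base_1 s : Rpower 1 s = 1.
Proof. unfold Rpower. rewrite ln_1, Rmult_0_r. apply exp_0. Qed.

Lemma Rpower_le1 x s : 0 <= s -> 0 < x <= 1 -> Rpower x s <= 1.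
Proof. intros Hs Hx. rewrite <- (Rpower_base_1 s). apply Rle_Rpower_l; lra. Qed.

Lemma Rpower_ge1 x s : 0 <= s -> 1 <= x -> 1 <= Rpower x s.
Proof. intros Hs Hx. rewrite <- (Rpower_base_1 s). apply Rle_Rpower_l; lra. Qed.

Lemma Rle_Rpower_l_nonpos c x y : c <= 0 -> 0 < x <= y -> Rpower y c <= Rpower x c.
Proof.
  intros Hc Hxy. replace c with (- (- c)) by ring. rewrite (Rpower_Ropp y), (Rpower_Ropp x).
  apply Rinv_le_contravar; [apply Rpower_gt0|apply Rle_Rpower_l; lra].
Qed.

Lemma Rpower_le1_nonpos x c : c <= 0 -> 1 <= x -> Rpower x c <= 1.
Proof. intros Hc Hx. rewrite <- (Rpower_base_1 c). apply Rle_Rpower_l_nonpos; lra. Qed.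

Lemma Rpower_pred x s : 0 < x -> Rpower x s = x * Rpower x (s - 1).
Proof.
  intros Hx. replace s with (1 + (s - 1)) at 1 by ring. rewrite Rpower_plus, Rpower_1; auto.
Qed.

Lemma Rpower_concave_tangent s a x : 0 < s <= 1 -> 0 < a -> 0 < x ->
  Rpower x s <= Rpower a s + s * Rpower a (s - 1) * (x - a).
Proof.
  intros Hs Ha Hx.
  apply (concave_tangent_le (fun x => Rpower x s) (fun x => s * Rpower x (s - 1)) 0); auto.
  - intros y Hy. apply derivable_pt_lim_power; auto.
  - intros y z Hy Hyz. apply Rmult_le_compat_l; [lra|apply Rle_Rpower_l_nonpos; lra].
Qed.

Lemma Rpower_subadditive s a b : 0 < s <= 1 -> 0 < a -> 0 < b ->
  Rpower (a + b) s <= Rpower a s + Rpower b s.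
Proof.
  intros Hs Ha Hb. rewrite (Rpower_pred (a + b)), (Rpower_pred a), (Rpower_pred b) by lra.
  assert (Rpower (a + b) (s - 1) <= Rpower a (s - 1)) by (apply Rle_Rpower_l_nonpos; lra).
  assert (Rpower (a + b) (s - 1) <= Rpower b (s - 1)) by (apply Rle_Rpower_l_nonpos; lra).
  nra.
Qed.

Lemma Rpower_INR_unbounded s : 0 < s ->
  forall M, exists Z : nat, forall z : nat, (Z <= z)%nat -> M <= Rpower (INR z + 1) s.
Proof.
  intros Hs M. destruct (INR_unbounded (exp ((M - 1) / s))) as [Z HZ]. exists Z. intros z Hz.
  assert (HzZ : INR Z <= INR z) by (apply le_INR; auto).
  assert (Hpos : 0 < INR z + 1) by (assert (0 <= INR z) by apply pos_INR; lra).
  apply Rle_trans with (1 + s * ln (INR z + 1)); [|apply exp_ineq1_le].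
  assert ((M - 1) / s <= ln (INR z + 1)).
  { rewrite <- (ln_exp ((M - 1) / s)). apply ln_le; [apply exp_pos|lra]. }
  apply (Rmult_le_compat_l s) in H; [|lra].
  replace (s * ((M - 1) / s)) with (M - 1) in H by (field; lra). lra.
Qed.

Lemma ln_le_sub1 x : 0 < x -> ln x <= x - 1.
Proof. intros Hx. assert (H := exp_ineq1_le (ln x)). rewrite exp_ln in H; lra. Qed.

Lemma Rpower_neg_tangent b t u : 0 < b -> 0 < t -> 0 < u ->
  Rpower u (- b) <= Rpower t (- b) + b * Rpower u (- b - 1) * (t - u).
Proof.
  intros Hb Ht Hu.
  assert (E1 : Rpower t (- b) = Rpower u (- b) * exp (- b * (ln t - ln u)))
    by (unfold Rpower; rewrite <- exp_plus; f_equal; ring).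
  assert (E2 : Rpower u (- b) = u * Rpower u (- b - 1)) by (apply Rpower_pred; auto).
  assert (H1 := exp_ineq1_le (- b * (ln t - ln u))).
  assert (H2 : ln t - ln u <= t / u - 1)
    by (rewrite <- ln_div by auto; apply ln_le_sub1, Rdiv_lt_0_compat; auto).
  assert (Hp := Rpower_gt0 u (- b)). assert (Hp1 := Rpower_gt0 u (- b - 1)).
  rewrite E1.
  assert (Rpower u (- b) * (1 + - b * (ln t - ln u)) <= Rpower u (- b) * exp (- b * (ln t - ln u)))
    by (apply Rmult_le_compat_l; lra).
  assert (Rpower u (- b) * (1 + - b * (t / u - 1)) <= Rpower u (- b) * (1 + - b * (ln t - ln u)))
    by (apply Rmult_le_compat_l; nra).
  assert (Rpower u (- b) * (1 + - b * (t / u - 1))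
          = Rpower u (- b) - b * Rpower u (- b - 1) * (t - u)) by (rewrite E2; field; lra).
  lra.
Qed.

Lemma is_derive_Rpower_comp (g : R -> R) x dg b : 0 < g x -> is_derive g x dg ->
  is_derive (fun y => Rpower (g y) b) x (dg * (b * Rpower (g x) (b - 1))).
Proof.
  intros Hg Hd. apply (is_derive_comp (fun t => Rpower t b) g x); [|exact Hd].
  apply is_derive_Reals, derivable_pt_lim_power; auto.
Qed.

Lemma pow_le_pow_le1 (x : R) m n : 0 <= x <= 1 -> (m <= n)%nat -> x ^ n <= x ^ m.
Proof.
  intros Hx H. induction H as [|n _ IH]; [lra|]. simpl. apply Rle_trans with (x ^ n); auto.
  assert (0 <= x ^ n) by (apply pow_le; lra). nra.
Qed.

(** * The subcritical case: power functions *)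

Section PowerDrift.
Variable p : R.
Hypothesis p_gt0 : 0 < p.
Hypothesis p_lt1 : p < 1.

Definition powf (s : R) (k : nat) := Rpower (INR k + 1) s.

Lemma powf_ge1 s k : 0 <= s -> 1 <= powf s k.
Proof. intros. apply Rpower_ge1; auto. assert (0 <= INR k) by apply pos_INR. lra. Qed.

Lemma powf_nondecr s k : 0 <= s -> powf s k <= powf s (S k).
Proof.
  intros. apply Rle_Rpower_l; auto. rewrite S_INR. assert (0 <= INR k) by apply pos_INR. lra.
Qed.

Lemma binom_w_jensen_powf s j : 0 < s <= 1 ->
  sum_n (fun m => binom_w p j m * powf s m) j <= Rpower (INR j * p + 1) s.
Proof.
  intros Hs. assert (Hj : 0 <= INR j) by apply pos_INR.
  assert (H := binom_w_jensen p p_gt0 p_lt1 (fun x => Rpower x s) (fun m => INR m + 1)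
                 (INR j * p + 1) (s * Rpower (INR j * p + 1) (s - 1)) j).
  rewrite binom_w_mean_S, Rminus_eq_0, Rmult_0_r, Rplus_0_r in H by lra. apply H.
  intros m _. apply Rpower_concave_tangent; auto; [nra|].
  assert (0 <= INR m) by apply pos_INR. lra.
Qed.

Lemma Rpower_binom_mean_le s j : 0 < s <= 1 -> Rpower (INR j * p + 1) s <= Rpower p s * powf s j + 1.
Proof.
  intros Hs. assert (0 <= INR j) by apply pos_INR.
  replace (INR j * p + 1) with (p * (INR j + 1) + (1 - p)) by ring.
  eapply Rle_trans; [apply Rpower_subadditive; auto; nra|].
  unfold powf. rewrite <- Rpower_mult_distr by lra.
  assert (Rpower (1 - p) s <= 1) by (apply Rpower_le1; lra). lra.
Qed.

(* The up-jump adds at most [s (j+1)^(s-1)] by concavity; after the binomial down-jump the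
   mean of [(m+1)^s] is, by Jensen, at most [p^s (j+1)^s + 1]. *)
Lemma drift_powf s j : 0 < s <= 1 ->
  drift p (powf s) j <= p * ((s + Rpower p s - 1) * powf s j + s + 1).
Proof.
  intros Hs. rewrite drift_split.
  set (X := INR j + 1).
  assert (HX : 1 <= X) by (unfold X; assert (0 <= INR j) by apply pos_INR; lra).
  assert (HXs : X * Rpower X (s - 1) = powf s j) by (unfold powf; fold X; rewrite <- Rpower_pred; lra).
  assert (HX1 : Rpower X (s - 1) <= 1) by (apply Rpower_le1_nonpos; lra).
  assert (HX0 : 0 <= Rpower X (s - 1)) by (left; apply Rpower_gt0).
  assert (Hup : INR (j + 2) * p * (powf s (S j) - powf s j) <= p * (s * powf s j + s)).
  { assert (Ht : powf s (S j) - powf s j <= s * Rpower X (s - 1)).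
    { unfold powf. rewrite S_INR. fold X.
      assert (H := Rpower_concave_tangent s X (X + 1) Hs ltac:(lra) ltac:(lra)). lra. }
    replace (INR (j + 2)) with (X + 1) by (unfold X; rewrite plus_INR; simpl; ring).
    apply Rle_trans with ((X + 1) * p * (s * Rpower X (s - 1))).
    - apply Rmult_le_compat_l; [apply Rmult_le_pos|]; lra.
    - rewrite <- HXs. assert (0 <= p * s * (1 - Rpower X (s - 1))) by (repeat apply Rmult_le_pos; lra).
      nra. }
  assert (Hdown : sum_n (fun m => binom_w p j m * (powf s m - powf s j)) j
                  <= Rpower p s * powf s j + 1 - powf s j).
  { rewrite (sum_n_ext _ (fun m => binom_w p j m * powf s m - powf s j * binom_w p j m))
      by (intros; R_eq; ring).
    rewrite sum_n_Rminus, sum_n_Rscal, binom_w_sum by auto.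
    assert (H1 := binom_w_jensen_powf s j Hs). assert (H2 := Rpower_binom_mean_le s j Hs). lra. }
  nra.
Qed.

Definition dist_below (i z : nat) : R := INR (i - z).
Definition ind_above (i z : nat) : R := if Nat.ltb i z then 1 else 0.

Lemma drift_dist_below_lt i z : (z < i)%nat -> drift p (dist_below i) z <= - 2 * p.
Proof.
  intros Hz. rewrite drift_split.
  assert (H1 : dist_below i (S z) - dist_below i z = -1).
  { unfold dist_below. replace (i - z)%nat with (S (i - S z)) by lia. rewrite S_INR. ring. }
  rewrite H1.
  rewrite (sum_n_ext_loc _ (fun m => INR z * binom_w p z m - binom_w p z m * INR m)).
  2: { intros m Hm. unfold dist_below. rewrite !minus_INR by lia. R_eq; ring. }
  rewrite sum_n_Rminus, sum_n_Rscal, binom_w_sum, binom_w_mean by auto.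
  rewrite plus_INR. simpl INR. assert (0 <= INR z) by apply pos_INR. nra.
Qed.

Lemma drift_dist_below_ge i z : (i <= z)%nat -> drift p (dist_below i) z <= p * INR i.
Proof.
  intros Hz. rewrite drift_split.
  assert (H1 : dist_below i (S z) - dist_below i z = 0).
  { unfold dist_below. replace (i - z)%nat with 0%nat by lia.
    replace (i - S z)%nat with 0%nat by lia. ring. }
  rewrite H1, Rmult_0_r, Rplus_0_l. apply Rmult_le_compat_l; [lra|].
  rewrite <- (Rmult_1_r (INR i)), <- (binom_w_sum p z), <- sum_n_Rscal.
  apply sum_n_le_loc. intros m Hm. unfold dist_below. replace (i - z)%nat with 0%nat by lia.
  assert (INR (i - m) <= INR i) by (apply le_INR; lia).
  assert (0 <= binom_w p z m) by (apply binom_w_ge0; lra). simpl INR. nra.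
Qed.

Lemma drift_ind_above_le i z : (z < i)%nat -> drift p (ind_above i) z = 0.
Proof.
  intros Hz. rewrite drift_split. unfold ind_above.
  destruct (Nat.ltb_spec i (S z)); [lia|]. destruct (Nat.ltb_spec i z); [lia|].
  rewrite (sum_n_ext_loc _ (fun _ => 0)), sum_n_zero; [ring|].
  intros m Hm. destruct (Nat.ltb_spec i m); [lia|]. R_eq; ring.
Qed.

(* Only the jump to state [0] is kept. *)
Lemma drift_ind_above_gt i z : (i < z)%nat -> drift p (ind_above i) z <= - p * (1 - p) ^ z.
Proof.
  intros Hz. rewrite drift_split.
  assert (E1 : ind_above i (S z) = 1)
    by (unfold ind_above; destruct (Nat.ltb_spec i (S z)); [auto|lia]).
  assert (E2 : ind_above i z = 1) by (unfold ind_above; destruct (Nat.ltb_spec i z); [auto|lia]).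
  assert (E3 : ind_above i 0 = 0) by (unfold ind_above; destruct (Nat.ltb_spec i 0); [lia|auto]).
  rewrite E1, E2, Rminus_eq_0, Rmult_0_r, Rplus_0_l.
  destruct z as [|z]; [lia|]. rewrite sum_n_shift, E3, binom_w_0.
  assert (sum_n (fun k => binom_w p (S z) (S k) * (ind_above i (S k) - 1)) z <= 0).
  { rewrite <- (sum_n_zero z). apply sum_n_le_loc. intros m _. unfold ind_above.
    assert (0 <= binom_w p (S z) (S m)) by (apply binom_w_ge0; lra). destruct (Nat.ltb i (S m)); nra. }
  nra.
Qed.

Lemma ind_above_ge0 i z : 0 <= ind_above i z.
Proof. unfold ind_above. destruct (Nat.ltb i z); lra. Qed.

Lemma drift_ind_above_le0 i z : (i < z)%nat -> drift p (ind_above i) z <= 0.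
Proof.
  intros Hz. eapply Rle_trans; [apply drift_ind_above_gt; auto|].
  assert (0 <= (1 - p) ^ z) by (apply pow_le; lra). nra.
Qed.

Lemma drift_ind_above_scaled i Z z B : 0 <= B -> (i < z)%nat -> (z < Z)%nat ->
  B / (p * (1 - p) ^ Z) * drift p (ind_above i) z <= - B.
Proof.
  intros HB Hiz HzZ. assert (HpZ : 0 < (1 - p) ^ Z) by (apply pow_lt; lra).
  assert (Hc : 0 <= B / (p * (1 - p) ^ Z))
    by (apply Rle_mult_inv_pos; [lra|apply Rmult_lt_0_compat; auto]).
  assert ((1 - p) ^ Z <= (1 - p) ^ z) by (apply pow_le_pow_le1; lra || lia).
  apply Rle_trans with (B / (p * (1 - p) ^ Z) * (- p * (1 - p) ^ Z)).
  - apply Rle_trans with (B / (p * (1 - p) ^ Z) * (- p * (1 - p) ^ z));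
      apply Rmult_le_compat_l; auto; [apply drift_ind_above_gt; auto|nra].
  - right. field. lra.
Qed.

Variable s : R.
Hypothesis s_gt0 : 0 < s.
Hypothesis s_subcrit : s + Rpower p s - 1 < 0.

Lemma s_le1 : s <= 1.
Proof. assert (H := Rpower_gt0 p s). lra. Qed.

Let gap := 1 - s - Rpower p s.

Lemma drift_powf_gap j : drift p (powf s) j <= p * (s + 1) - p * gap * powf s j.
Proof. assert (H := drift_powf s j (conj s_gt0 s_le1)). unfold gap. lra. Qed.

(* [powf s] has drift [-> -oo]; [dist_below i] repairs the drift below [i], and [ind_above i]
   (whose drift is bounded away from 0 on the finite range [i < z < Z]) the drift there. *)
Lemma lyapunov_exists i : exists V : nat -> R,
  (forall z, 0 <= V z) /\ (forall z, z <> i -> drift p V z <= -1) /\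
  (forall M, exists Z, forall z, (Z <= z)%nat -> M <= V z).
Proof.
  assert (Hgap : 0 < gap) by (unfold gap; lra).
  set (K := s + 1). set (a := (p * K + 1) / (2 * p)). set (B := a * p * INR i + p * K + 1).
  assert (Ha : 0 <= a) by (unfold a, K; apply Rle_mult_inv_pos; nra).
  assert (Hi : 0 <= INR i) by apply pos_INR.
  assert (HB : 0 < B).
  { assert (0 <= a * p * INR i) by (apply Rmult_le_pos; [apply Rmult_le_pos|]; lra).
    assert (0 < p * K) by (unfold K; apply Rmult_lt_0_compat; lra).
    unfold B; lra. }
  destruct (Rpower_INR_unbounded s s_gt0 (B / (p * gap))) as [Z HZ].
  set (c := B / (p * (1 - p) ^ Z)).
  assert (Hc : 0 <= c)
    by (unfold c; apply Rle_mult_inv_pos; [lra|apply Rmult_lt_0_compat, pow_lt; lra]).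
  exists (fun k => a * dist_below i k + (powf s k + c * ind_above i k)). split; [|split].
  - intros z. assert (0 <= dist_below i z) by apply pos_INR.
    assert (1 <= powf s z) by (apply powf_ge1; lra). assert (Hz := ind_above_ge0 i z). nra.
  - intros z Hz. rewrite drift_plus, drift_scal, drift_plus, drift_scal.
    assert (Hf := drift_powf_gap z). assert (1 <= powf s z) by (apply powf_ge1; lra).
    assert (0 <= p * gap * powf s z) by (repeat apply Rmult_le_pos; lra).
    destruct (Nat.lt_ge_cases z i) as [Hzi|Hzi].
    + rewrite drift_ind_above_le by auto.
      assert (a * drift p (dist_below i) z <= a * (- 2 * p))
        by (apply Rmult_le_compat_l; auto; apply drift_dist_below_lt; auto).
      assert (a * (- 2 * p) = - (p * K + 1)) by (unfold a; field; lra). unfold K in *. nra.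
    + assert (Hiz : (i < z)%nat) by lia.
      assert (a * drift p (dist_below i) z <= a * (p * INR i))
        by (apply Rmult_le_compat_l; auto; apply drift_dist_below_ge; auto).
      destruct (Nat.lt_ge_cases z Z) as [HzZ|HzZ].
      * assert (c * drift p (ind_above i) z <= - B) by (apply drift_ind_above_scaled; lra || auto).
        unfold B, K in *. nra.
      * assert (c * drift p (ind_above i) z <= 0)
          by (apply Rmult_le_0_l; [auto|apply drift_ind_above_le0; auto]).
        assert (Hf1 := HZ z HzZ). fold (powf s z) in Hf1.
        apply (Rmult_le_compat_l (p * gap)) in Hf1; [|nra].
        replace (p * gap * (B / (p * gap))) with B in Hf1 by (field; nra).
        unfold B, K in *. nra.
  - intros M. destruct (Rpower_INR_unbounded s s_gt0 M) as [ZM HZM]. exists ZM. intros z Hz.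
    specialize (HZM z Hz). fold (powf s z) in HZM.
    assert (0 <= dist_below i z) by apply pos_INR. assert (Hi' := ind_above_ge0 i z). nra.
Qed.

Lemma qbar_positive_recurrent : positive_recurrent (qbar p).
Proof.
  split; [apply qbar_irreducible; auto|]. intros i.
  destruct (lyapunov_exists i) as [V [H1 [H2 H3]]].
  apply (pos_rec_state_of_lyapunov p p_gt0 p_lt1 i V); auto.
Qed.

Lemma qbar_stationary_exists : exists pi, stationary (qbar p) pi.
Proof.
  destruct (lyapunov_exists 0) as [V [H1 [H2 H3]]].
  apply (stationary_of_lyapunov p p_gt0 p_lt1 0 V); auto.
Qed.

Lemma moment_lt_p_infty pi : stationary (qbar p) pi -> Rbar_lt (moment pi s) p_infty.
Proof.
  intros Hst. assert (Hgap : 0 < p * gap) by (apply Rmult_lt_0_compat; unfold gap; lra).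
  assert (HK : 0 <= p * (s + 1)) by (apply Rmult_le_pos; lra).
  assert (Hb := stationary_drift_bound p p_gt0 p_lt1 pi Hst (powf s)
                  (fun k => powf_nondecr s k (Rlt_le _ _ s_gt0)) (p * (s + 1))
                  (fun j => p * gap * powf s j) HK drift_powf_gap).
  unfold moment. refine (psum_lt_p_infty _ _ (p * (s + 1) / (p * gap)) _).
  - intros k. apply Rmult_le_pos; [apply (stationary_ge0 p pi Hst)|left; apply Rpower_gt0].
  - intros N. specialize (Hb N).
    rewrite (sum_n_ext _ (fun j => / (p * gap) * (pi j * (p * gap * powf s j)))).
    2: { intros j. unfold powf. rewrite S_INR. R_eq. field.
         split; [unfold gap|]; lra. }
    rewrite sum_n_Rscal. unfold Rdiv. rewrite (Rmult_comm (p * (s + 1))).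
    apply Rmult_le_compat_l; [left; apply Rinv_0_lt_compat; lra|exact Hb].
Qed.

End PowerDrift.

(** * The critical case: logarithmic corrections *)

Section LogCorrectedPower.
Variables q r c : R.
Hypothesis q_gt0 : 0 < q.
Hypothesis r_gt0 : 0 < r.
Hypothesis c_large : (r + 1) / q + 1 <= c.

(* [Glog (X ^ q) = X ^ q (ln X + c) ^ -r]; as a function of [y = X ^ q] it is concave. *)
Definition lgq (y : R) := ln y / q + c.
Definition Glog (y : R) := y * Rpower (lgq y) (- r).
Definition psi (t : R) := Rpower t (- r) - (r / q) * Rpower t (- r - 1).
Definition Glog' (y : R) := psi (lgq y).

Lemma rq_gt0 : 0 < (r + 1) / q.
Proof. apply Rdiv_lt_0_compat; lra. Qed.

Lemma lgq_gt y : exp (- q) < y -> (r + 1) / q < lgq y.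
Proof.
  intros Hy. unfold lgq. assert (0 < y) by (eapply Rlt_trans; [apply exp_pos|eauto]).
  assert (- q < ln y) by (rewrite <- (ln_exp (- q)); apply ln_increasing; [apply exp_pos|auto]).
  assert (-1 < ln y / q).
  { apply (Rmult_lt_reg_r q); auto. unfold Rdiv. rewrite Rmult_assoc, Rinv_l; lra. }
  lra.
Qed.

Lemma lgq_le y1 y2 : 0 < y1 -> y1 <= y2 -> lgq y1 <= lgq y2.
Proof.
  intros H1 H12. unfold lgq, Rdiv. assert (ln y1 <= ln y2) by (apply ln_le; auto).
  assert (0 < / q) by (apply Rinv_0_lt_compat; auto). nra.
Qed.

Lemma Glog_derive y : exp (- q) < y -> derivable_pt_lim Glog y (Glog' y).
Proof.
  intros Hy. assert (Hy0 : 0 < y) by (eapply Rlt_trans; [apply exp_pos|eauto]).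
  assert (Hl := lgq_gt y Hy). assert (Hrq := rq_gt0).
  apply is_derive_Reals.
  assert (Hlgq : is_derive lgq y (/ y * / q)).
  { assert (H := is_derive_plus (fun t => / q * ln t) (fun _ => c) y (/ q * / y) zero
                   (is_derive_scal ln y (/ q) (/ y) (is_derive_ln y Hy0)) (is_derive_const c y)).
    eapply is_derive_ext;
      [|replace (/ y * / q) with (plus (/ q * / y) zero) by (unfold plus, zero; simpl; ring); exact H].
    intros t. unfold lgq, plus; simpl. unfold Rdiv; ring. }
  assert (Hpw := is_derive_Rpower_comp lgq y _ (- r) ltac:(lra) Hlgq).
  assert (Hm := is_derive_mult (fun t => t) (fun t => Rpower (lgq t) (- r)) y one _
                  (is_derive_id y) Hpw ltac:(intros; apply Rmult_comm)).
  eapply is_derive_ext; [|replace (Glog' y) with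
    (plus (mult one (Rpower (lgq y) (- r))) (mult y (/ y * / q * (- r * Rpower (lgq y) (- r - 1)))));
    [exact Hm|]].
  - intros t. reflexivity.
  - unfold Glog', psi, plus, mult, one; simpl. field. split; lra.
Qed.

Lemma psi_derive t : 0 < t -> derivable_pt_lim psi t (Rpower t (- r - 2) * r * ((r + 1) / q - t)).
Proof.
  intros Ht. unfold psi.
  replace (Rpower t (- r - 2) * r * ((r + 1) / q - t)) with
    (- r * Rpower t (- r - 1) - (r / q) * ((- r - 1) * Rpower t (- r - 1 - 1))).
  - apply derivable_pt_lim_minus; [|apply derivable_pt_lim_scal]; apply derivable_pt_lim_power; auto.
  - replace (- r - 1 - 1) with (- r - 2) by ring.
    rewrite (Rpower_pred t (- r - 1)) by auto. replace (- r - 1 - 1) with (- r - 2) by ring.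
    field. lra.
Qed.

Lemma psi_nonincr t1 t2 : (r + 1) / q < t1 -> t1 <= t2 -> psi t2 <= psi t1.
Proof.
  intros H1 H12. assert (Hrq := rq_gt0).
  apply (nonincreasing_of_derive_le0 psi (fun t => Rpower t (- r - 2) * r * ((r + 1) / q - t))
           ((r + 1) / q)); auto.
  - intros x Hx. apply psi_derive. lra.
  - intros x Hx. assert (Hp := Rpower_gt0 x (- r - 2)).
    assert (0 < Rpower x (- r - 2) * r) by nra. nra.
Qed.

Lemma psi_ge0 t : (r + 1) / q < t -> 0 <= psi t.
Proof.
  intros H. assert (Hrq := rq_gt0). unfold psi. rewrite (Rpower_pred t (- r)) by lra.
  replace (- r - 1) with (- r - 1) by ring.
  assert (Hp := Rpower_gt0 t (- r - 1)).
  assert (r / q < t).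
  { apply Rlt_trans with ((r + 1) / q); auto. unfold Rdiv.
    apply Rmult_lt_compat_r; [apply Rinv_0_lt_compat|]; lra. }
  nra.
Qed.

Lemma psi_le1 t : 1 <= t -> psi t <= 1.
Proof.
  intros Ht. unfold psi. assert (Rpower t (- r) <= 1) by (apply Rpower_le1_nonpos; lra).
  assert (0 <= r / q * Rpower t (- r - 1))
    by (apply Rmult_le_pos; [left; apply Rdiv_lt_0_compat|left; apply Rpower_gt0]; lra).
  lra.
Qed.

Lemma Glog_tangent a y : exp (- q) < a -> exp (- q) < y -> Glog y <= Glog a + Glog' a * (y - a).
Proof.
  apply (concave_tangent_le Glog Glog' (exp (- q))); [apply Glog_derive|].
  intros x z Hx Hxz. apply psi_nonincr; [apply lgq_gt; auto|].
  apply lgq_le; [eapply Rlt_trans; [apply exp_pos|eauto]|auto].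
Qed.

Lemma Glog_le a b : exp (- q) < a -> a <= b -> Glog a <= Glog b.
Proof.
  intros Ha Hab. assert (H := Glog_tangent b a ltac:(lra) Ha).
  assert (Hd : 0 <= Glog' b) by (apply psi_ge0, lgq_gt; lra). nra.
Qed.

End LogCorrectedPower.

(* Two tangent steps at [l - a]; [l - a >= l / 2] bounds [(l - a) ^ (-r-2)] by
   [2 ^ (r+2) l ^ (-r-2)]. *)
Lemma Rpower_neg_shift_le r a l : 0 < r -> 0 <= a -> 1 <= l - a -> l / 2 <= l - a ->
  Rpower (l - a) (- r) <= Rpower l (- r) + r * a * Rpower l (- r - 1)
                          + r * (r + 1) * a ^ 2 * Rpower (/ 2) (- r - 2) * Rpower l (- r - 2).
Proof.
  intros Hr Ha Hu1 Hu2. assert (Hl : 1 <= l) by lra.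
  set (u := l - a) in *. set (C2 := Rpower (/ 2) (- r - 2)).
  assert (T1 := Rpower_neg_tangent r l u Hr ltac:(lra) ltac:(lra)).
  assert (T2 := Rpower_neg_tangent (r + 1) l u ltac:(lra) ltac:(lra) ltac:(lra)).
  replace (l - u) with a in T1, T2 by (unfold u; ring).
  replace (- (r + 1)) with (- r - 1) in T2 by ring. replace (- r - 1 - 1) with (- r - 2) in T2 by ring.
  assert (T3 : Rpower u (- r - 2) <= Rpower l (- r - 2) * C2).
  { eapply Rle_trans; [apply (Rle_Rpower_l_nonpos (- r - 2) (l / 2) u); lra|].
    unfold Rdiv, C2. rewrite Rpower_mult_distr; lra. }
  assert (HC2 : 0 < C2) by apply Rpower_gt0.
  assert (r * a * Rpower u (- r - 1)
          <= r * a * (Rpower l (- r - 1) + (r + 1) * a * (Rpower l (- r - 2) * C2))).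
  { apply Rmult_le_compat_l; [nra|].
    assert ((r + 1) * a * Rpower u (- r - 2) <= (r + 1) * a * (Rpower l (- r - 2) * C2))
      by (apply Rmult_le_compat_l; nra).
    lra. }
  nra.
Qed.

Section LogDrift.
Variables p q r c : R.
Hypothesis p_gt0 : 0 < p.
Hypothesis p_lt1 : p < 1.
Hypothesis q_gt0 : 0 < q.
Hypothesis q_lt1 : q < 1.
Hypothesis p_crit : Rpower p q = 1 - q.
Hypothesis r_gt0 : 0 < r.

Definition alpha := - ln p.
Definition kappa := 1 - (1 - q) * alpha.
Definition C3 := r * (r + 1) * alpha ^ 2 * Rpower (/ 2) (- r - 2).

Hypothesis c_large : (r + 1) / q + 1 <= c.
Hypothesis c_ge_2alpha : 2 * alpha <= c.
Hypothesis c_ge_alpha1 : alpha + 1 <= c.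
Hypothesis c_absorbs_C3 : (1 - q) * C3 <= r * kappa / 2 * c.

Lemma alpha_gt0 : 0 < alpha.
Proof. unfold alpha. assert (ln p < 0) by (rewrite <- ln_1; apply ln_increasing; lra). lra. Qed.

(* From [q ln p = ln (1 - q)] and [- ln (1 - q) < q / (1 - q)]. *)
Lemma kappa_gt0 : 0 < kappa.
Proof.
  unfold kappa, alpha.
  assert (Hl : q * ln p = ln (1 - q)) by (rewrite <- p_crit; unfold Rpower; rewrite ln_exp; auto).
  set (x := q / (1 - q)).
  assert (Hx : 0 < x) by (unfold x; apply Rdiv_lt_0_compat; lra).
  assert (H1 := exp_ineq1 x ltac:(lra)).
  assert (Hx1 : 1 + x = / (1 - q)) by (unfold x; field; lra).
  assert (H2 : ln (/ (1 - q)) < x).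
  { rewrite <- (ln_exp x). apply ln_increasing; [apply Rinv_0_lt_compat|]; lra. }
  rewrite ln_Rinv in H2 by lra.
  assert (H3 : (1 - q) * (- ln (1 - q)) < q).
  { apply (Rmult_lt_compat_l (1 - q)) in H2; [|lra]. unfold x in H2.
    replace ((1 - q) * (q / (1 - q))) with q in H2 by (field; lra). lra. }
  assert (H4 : q * ((1 - q) * - ln p) = (1 - q) * - ln (1 - q)) by (rewrite <- Hl; ring).
  assert (H5 : (1 - q) * - ln p < 1) by (apply (Rmult_lt_reg_l q); lra).
  lra.
Qed.

Lemma c_ge1 : 1 <= c.
Proof. assert (H := alpha_gt0). lra. Qed.

Lemma C3_ge0 : 0 <= C3.
Proof.
  unfold C3. assert (0 < Rpower (/ 2) (- r - 2)) by apply Rpower_gt0.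
  assert (0 <= alpha ^ 2) by apply pow2_ge_0.
  assert (0 <= r * (r + 1)) by nra.
  apply Rmult_le_pos; [apply Rmult_le_pos|]; lra.
Qed.

Definition logf (k : nat) := Glog q r c (Rpower (INR k + 1) q).

Lemma lgq_Rpower X : 0 < X -> lgq q c (Rpower X q) = ln X + c.
Proof. intros. unfold lgq. rewrite ln_Rpower. field. lra. Qed.

Lemma logf_eq k : logf k = Rpower (INR k + 1) q * Rpower (ln (INR k + 1) + c) (- r).
Proof.
  unfold logf, Glog. rewrite lgq_Rpower; auto. assert (0 <= INR k) by apply pos_INR. lra.
Qed.

Lemma exp_neg_q_lt1 : exp (- q) < 1.
Proof. rewrite <- exp_0. apply exp_increasing. lra. Qed.

Lemma logf_nondecr k : logf k <= logf (S k).
Proof.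
  unfold logf. assert (0 <= INR k) by apply pos_INR. apply Glog_le; auto.
  - assert (1 <= Rpower (INR k + 1) q) by (apply Rpower_ge1; lra).
    assert (He := exp_neg_q_lt1). lra.
  - rewrite S_INR. apply Rle_Rpower_l; lra.
Qed.

Lemma drift_logf_up j :
  let X := INR j + 1 in let l := ln X + c in
  INR (j + 2) * p * (logf (S j) - logf j) <=
  p * q * Rpower X q * Rpower l (- r) - p * r * Rpower X q * Rpower l (- r - 1) + p * q.
Proof.
  intros X l.
  assert (HX : 1 <= X) by (unfold X; assert (0 <= INR j) by apply pos_INR; lra).
  assert (HlnX : 0 <= ln X) by (rewrite <- ln_1; apply ln_le; lra).
  assert (Hc1 := c_ge1). assert (He := exp_neg_q_lt1).
  assert (Hl : c <= l) by (unfold l; lra).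
  assert (Hrq : (r + 1) / q < l) by lra.
  set (Xq := Rpower X q).
  assert (HXq : 1 <= Xq) by (apply Rpower_ge1; lra).
  assert (HX1q : 1 <= Rpower (X + 1) q) by (apply Rpower_ge1; lra).
  assert (Ht := Glog_tangent q r c q_gt0 r_gt0 c_large Xq (Rpower (X + 1) q) ltac:(lra) ltac:(lra)).
  assert (Ef1 : logf (S j) = Glog q r c (Rpower (X + 1) q)) by (unfold logf, X; rewrite S_INR; auto).
  assert (EGd : Glog' q r c Xq = psi q r l) by (unfold Glog', Xq, l; rewrite lgq_Rpower; auto; lra).
  set (L0 := Rpower l (- r)). set (L1 := Rpower l (- r - 1)).
  assert (Epsi : psi q r l = L0 - r / q * L1) by reflexivity.
  assert (Hpsi0 := psi_ge0 q r q_gt0 r_gt0 l Hrq).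
  assert (Hpsi1 := psi_le1 q r q_gt0 r_gt0 l ltac:(lra)).
  assert (Hpt := Rpower_concave_tangent q X (X + 1) ltac:(lra) ltac:(lra) ltac:(lra)).
  fold Xq in Hpt. replace (X + 1 - X) with 1 in Hpt by ring.
  set (Xm := Rpower X (q - 1)) in *.
  assert (HXm : 0 < Xm) by apply Rpower_gt0.
  assert (HXm1 : Xm <= 1) by (apply Rpower_le1_nonpos; lra).
  assert (EXm : X * Xm = Xq) by (unfold Xm, Xq; rewrite <- Rpower_pred; lra).
  replace (INR (j + 2)) with (X + 1) by (unfold X; rewrite plus_INR; simpl; ring).
  rewrite Ef1. fold (logf j) in Ht |- *.
  assert (Hd : Glog q r c (Rpower (X + 1) q) - logf j <= psi q r l * (q * Xm)).
  { rewrite EGd in Ht.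
    assert (psi q r l * (Rpower (X + 1) q - Xq) <= psi q r l * (q * Xm * 1))
      by (apply Rmult_le_compat_l; lra).
    unfold logf; fold X Xq. lra. }
  apply Rle_trans with ((X + 1) * p * (psi q r l * (q * Xm))); [apply Rmult_le_compat_l; [nra|auto]|].
  replace ((X + 1) * p * (psi q r l * (q * Xm)))
    with (p * q * psi q r l * (X * Xm) + p * q * psi q r l * Xm) by ring.
  rewrite EXm.
  assert (p * q * psi q r l * Xm <= p * q).
  { assert (0 <= p * q) by nra. assert (psi q r l * Xm <= 1) by nra. nra. }
  rewrite Epsi in *.
  replace (p * q * (L0 - r / q * L1) * Xq) with (p * q * Xq * L0 - p * r * Xq * L1) by (field; lra).
  lra.
Qed.

(* Jensen for the concave [Glog]; for binomial [m], [E ((m + 1) ^ q) <= (p j + 1) ^ q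
   <= p ^ q X ^ q + 1], and [ln (p j + 1) >= ln X - alpha] since [p j + 1 >= p X]. *)
Lemma binom_w_mean_logf_le j :
  let X := INR j + 1 in
  sum_n (fun m => binom_w p j m * logf m) j
    <= ((1 - q) * Rpower X q + 1) * Rpower (ln X + c - alpha) (- r).
Proof.
  intros X.
  assert (HX : 1 <= X) by (unfold X; assert (0 <= INR j) by apply pos_INR; lra).
  assert (HlnX : 0 <= ln X) by (rewrite <- ln_1; apply ln_le; lra).
  assert (Hc1 := c_ge1). assert (Ha := alpha_gt0). assert (He := exp_neg_q_lt1).
  set (Y := fun m => Rpower (INR m + 1) q).
  set (A := sum_n (fun m => binom_w p j m * Y m) j).
  assert (HY1 : forall m, 1 <= Y m)
    by (intros m; apply Rpower_ge1; [lra|assert (0 <= INR m) by apply pos_INR; lra]).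
  assert (HA1 : 1 <= A).
  { unfold A. rewrite <- (binom_w_sum p j). apply sum_n_le_loc. intros m _.
    assert (0 <= binom_w p j m) by (apply binom_w_ge0; lra). specialize (HY1 m). nra. }
  assert (HJ : sum_n (fun m => binom_w p j m * logf m) j <= Glog q r c A).
  { assert (H := binom_w_jensen p p_gt0 p_lt1 (Glog q r c) Y A (Glog' q r c A) j).
    fold A in H. rewrite Rminus_eq_0, Rmult_0_r, Rplus_0_r in H. apply H.
    intros m _. apply Glog_tangent; auto; specialize (HY1 m); lra. }
  set (Z := INR j * p + 1).
  assert (HZ : 1 <= Z) by (unfold Z; assert (0 <= INR j) by apply pos_INR; nra).
  assert (HAZ : A <= Rpower Z q) by (apply binom_w_jensen_powf; lra).
  assert (HZq : Rpower Z q <= (1 - q) * Rpower X q + 1)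
    by (rewrite <- p_crit; apply Rpower_binom_mean_le; lra).
  assert (HlnZ : ln X + c - alpha <= ln Z + c).
  { assert (EZ : Z = p * X + (1 - p)) by (unfold Z, X; ring).
    assert (H : ln (p * X) <= ln Z) by (apply ln_le; nra).
    unfold alpha. rewrite ln_mult in H by lra. lra. }
  assert (HGZ : Glog q r c (Rpower Z q) = Rpower Z q * Rpower (ln Z + c) (- r))
    by (unfold Glog; rewrite lgq_Rpower; lra).
  assert (HR : Rpower (ln Z + c) (- r) <= Rpower (ln X + c - alpha) (- r))
    by (apply Rle_Rpower_l_nonpos; lra).
  assert (HR0 : 0 < Rpower (ln Z + c) (- r)) by apply Rpower_gt0.
  assert (HZ0 : 0 < Rpower Z q) by apply Rpower_gt0.
  apply Rle_trans with (Glog q r c (Rpower Z q)); [apply Rle_trans with (Glog q r c A); [exact HJ|]|].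
  - apply Glog_le; auto; lra.
  - rewrite HGZ. apply Rle_trans with (Rpower Z q * Rpower (ln X + c - alpha) (- r)).
    + apply Rmult_le_compat_l; lra.
    + apply Rmult_le_compat_r; [left; apply Rpower_gt0|lra].
Qed.

Lemma drift_logf_down j :
  let X := INR j + 1 in let l := ln X + c in
  sum_n (fun m => binom_w p j m * (logf m - logf j)) j <=
  (1 - q) * Rpower X q * (Rpower l (- r) + r * alpha * Rpower l (- r - 1) + C3 * Rpower l (- r - 2))
    + 1 - Rpower X q * Rpower l (- r).
Proof.
  intros X l.
  assert (HX : 1 <= X) by (unfold X; assert (0 <= INR j) by apply pos_INR; lra).
  assert (HlnX : 0 <= ln X) by (rewrite <- ln_1; apply ln_le; lra).
  assert (Hl : c <= l) by (unfold l; lra).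
  assert (Hc1 := c_ge1). assert (Ha := alpha_gt0).
  rewrite (sum_n_ext _ (fun m => binom_w p j m * logf m - logf j * binom_w p j m))
    by (intros; R_eq; ring).
  rewrite sum_n_Rminus, sum_n_Rscal, binom_w_sum, Rmult_1_r, logf_eq. fold X l.
  assert (HB := binom_w_mean_logf_le j). cbv zeta in HB. fold X l in HB.
  assert (HE := Rpower_neg_shift_le r alpha l r_gt0 ltac:(lra) ltac:(lra) ltac:(lra)).
  fold C3 in HE.
  assert (HXq : 1 <= Rpower X q) by (apply Rpower_ge1; lra).
  assert (HR1 : Rpower (l - alpha) (- r) <= 1) by (apply Rpower_le1_nonpos; lra).
  assert (0 <= (1 - q) * Rpower X q) by nra.
  assert ((1 - q) * Rpower X q * Rpower (l - alpha) (- r)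
          <= (1 - q) * Rpower X q * (Rpower l (- r) + r * alpha * Rpower l (- r - 1)
                                     + C3 * Rpower l (- r - 2))) by (apply Rmult_le_compat_l; lra).
  nra.
Qed.

(* Up- and down-jumps cancel at order [X^q l^-r] since [p^q = 1 - q]; what remains at order
   [X^q l^(-r-1)] is [- p (r - (1 - q) r alpha) = - p r kappa]. *)
Lemma drift_logf j :
  drift p logf j <= p * (q + 1)
    - p * (r * kappa / 2) * (Rpower (INR j + 1) q * Rpower (ln (INR j + 1) + c) (- r - 1)).
Proof.
  rewrite drift_split.
  assert (Hu := drift_logf_up j). assert (Hd := drift_logf_down j). simpl in Hu, Hd.
  set (X := INR j + 1) in *. set (l := ln X + c) in *.
  set (Xq := Rpower X q) in *. set (L0 := Rpower l (- r)) in *.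
  set (L1 := Rpower l (- r - 1)) in *. set (L2 := Rpower l (- r - 2)) in *.
  assert (HX : 1 <= X) by (unfold X; assert (0 <= INR j) by apply pos_INR; lra).
  assert (HlnX : 0 <= ln X) by (rewrite <- ln_1; apply ln_le; lra).
  assert (Hl : c <= l) by (unfold l; lra).
  assert (Hc1 := c_ge1). assert (Hk := kappa_gt0).
  assert (EL : L1 = l * L2)
    by (unfold L1, L2; rewrite (Rpower_pred l (- r - 1)) by lra; do 2 f_equal; ring).
  assert (HL2 : 0 < L2) by apply Rpower_gt0.
  assert (HXq : 0 < Xq) by apply Rpower_gt0.
  assert (H1 : (1 - q) * C3 * L2 <= r * kappa / 2 * L1).
  { rewrite EL. apply Rle_trans with (r * kappa / 2 * c * L2); [apply Rmult_le_compat_r; lra|].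
    assert (0 <= r * kappa / 2) by nra.
    assert (0 <= r * kappa / 2 * ((l - c) * L2)) by (repeat apply Rmult_le_pos; lra). nra. }
  assert (H2 : p * ((1 - q) * C3 * L2) * Xq <= p * (r * kappa / 2 * L1) * Xq)
    by (apply Rmult_le_compat_r; [lra|apply Rmult_le_compat_l; lra]).
  assert (Hd' : p * sum_n (fun m => binom_w p j m * (logf m - logf j)) j <=
     p * ((1 - q) * Xq * (L0 + r * alpha * L1 + C3 * L2) + 1 - Xq * L0))
    by (apply Rmult_le_compat_l; lra).
  unfold kappa in *. nra.
Qed.

End LogDrift.

(* With [x = p ^ (q/2)] one has [x^2 = 1 - q], and [q/2 + x - 1 = - (1 - x)^2 / 2 < 0]. *)
Lemma half_exponent_subcritical p q : 0 < p < 1 -> 0 < q -> Rpower p q = 1 - q ->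
  q / 2 + Rpower p (q / 2) - 1 < 0.
Proof.
  intros Hp Hq Hpq. set (x := Rpower p (q / 2)).
  assert (Hx2 : x * x = Rpower p q) by (unfold x; rewrite <- Rpower_plus; f_equal; field).
  assert (Hx1 : x < 1).
  { unfold x, Rpower. rewrite <- exp_0. apply exp_increasing.
    assert (ln p < 0) by (rewrite <- ln_1; apply ln_increasing; lra). nra. }
  assert (0 < (1 - x) * (1 - x)) by (apply Rmult_lt_0_compat; lra).
  nra.
Qed.

Lemma ln_S_ge_scaled c X : 1 <= X -> 0 <= c -> ln 2 / (ln 2 + c) * (ln X + c) <= ln (X + 1).
Proof.
  intros HX Hc. assert (Hl2 : 0 < ln 2) by (rewrite <- ln_1; apply ln_increasing; lra).
  assert (H1 : ln X <= ln (X + 1)) by (apply ln_le; lra).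
  assert (H2 : ln 2 <= ln (X + 1)) by (apply ln_le; lra).
  assert (HlnX : 0 <= ln X) by (rewrite <- ln_1; apply ln_le; lra).
  set (b := ln 2 / (ln 2 + c)).
  assert (Hb : 0 < b <= 1).
  { unfold b. split; [apply Rdiv_lt_0_compat; lra|].
    apply (Rmult_le_reg_r (ln 2 + c)); [lra|]. unfold Rdiv. rewrite Rmult_assoc, Rinv_l; lra. }
  assert (Hbc : b * c = (1 - b) * ln 2) by (unfold b; field; lra).
  nra.
Qed.

Lemma Rpower_ln_S_le c r X : 1 <= X -> 1 <= c -> 0 < r ->
  Rpower (ln (X + 1)) (- (r + 1))
    <= Rpower (ln 2 / (ln 2 + c)) (- r - 1) * Rpower (ln X + c) (- r - 1).
Proof.
  intros HX Hc Hr.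
  assert (Hl2 : 0 < ln 2) by (rewrite <- ln_1; apply ln_increasing; lra).
  assert (Hb : 0 < ln 2 / (ln 2 + c)) by (apply Rdiv_lt_0_compat; lra).
  assert (HlnX : 0 <= ln X) by (rewrite <- ln_1; apply ln_le; lra).
  assert (Hlog := ln_S_ge_scaled c X HX ltac:(lra)).
  assert (0 < ln 2 / (ln 2 + c) * (ln X + c)) by (apply Rmult_lt_0_compat; lra).
  replace (- (r + 1)) with (- r - 1) by ring.
  rewrite Rpower_mult_distr by lra. apply Rle_Rpower_l_nonpos; lra.
Qed.

Lemma log_offset_exists p q r : 0 < p < 1 -> 0 < q < 1 -> Rpower p q = 1 - q -> 0 < r ->
  exists c, (r + 1) / q + 1 <= c /\ 2 * alpha p <= c /\ alpha p + 1 <= c /\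
            (1 - q) * C3 p r <= r * kappa p q / 2 * c.
Proof.
  intros [Hp0 Hp1] [Hq0 Hq1] Hpq Hr.
  assert (Ha := alpha_gt0 p Hp0 Hp1). assert (Hk := kappa_gt0 p q Hq0 Hq1 Hpq).
  assert (HC3 := C3_ge0 p r Hr). assert (Hrk : 0 < r * kappa p q) by nra.
  assert (Hrq : 0 < (r + 1) / q) by (apply Rdiv_lt_0_compat; lra).
  set (c0 := 2 * (1 - q) * C3 p r / (r * kappa p q)).
  assert (Hc0 : 0 <= c0) by (apply Rle_mult_inv_pos; nra).
  exists ((r + 1) / q + 1 + 2 * alpha p + (alpha p + 1) + c0).
  repeat split; try lra.
  assert (r * kappa p q / 2 * c0 = (1 - q) * C3 p r) by (unfold c0; field; lra).
  assert (0 <= r * kappa p q / 2 * ((r + 1) / q + 1 + 2 * alpha p + (alpha p + 1)))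
    by (apply Rmult_le_pos; lra).
  lra.
Qed.

Lemma log_moment_lt_p_infty p q r pi : 0 < p < 1 -> 0 < q -> Rpower p q = 1 - q -> 0 < r ->
  stationary (qbar p) pi -> Rbar_lt (log_moment pi q r) p_infty.
Proof.
  intros [Hp0 Hp1] Hq0 Hpq Hr Hst.
  assert (Hq1 : q < 1) by (assert (H := Rpower_gt0 p q); lra).
  destruct (log_offset_exists p q r (conj Hp0 Hp1) (conj Hq0 Hq1) Hpq Hr) as [c [Hc1 [Hc2 [Hc3 Hc4]]]].
  assert (Hk := kappa_gt0 p q Hq0 Hq1 Hpq).
  set (Kp := p * (r * kappa p q / 2)).
  assert (HKp : 0 < Kp).
  { assert (0 < r * kappa p q) by (apply Rmult_lt_0_compat; lra).
    unfold Kp; apply Rmult_lt_0_compat; lra. }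
  assert (HK : 0 <= p * (q + 1)) by (apply Rmult_le_pos; lra).
  set (wv := fun j => Kp * (Rpower (INR j + 1) q * Rpower (ln (INR j + 1) + c) (- r - 1))).
  assert (Hb := stationary_drift_bound p Hp0 Hp1 pi Hst (logf q r c) (logf_nondecr q r c Hq0 Hr Hc1)
                  (p * (q + 1)) wv HK
                  (drift_logf p q r c Hp0 Hp1 Hq0 Hq1 Hpq Hr Hc1 Hc2 Hc3 Hc4)).
  assert (Hc0 : 1 <= c) by (assert (Ha := alpha_gt0 p Hp0 Hp1); lra).
  set (Mb := Rpower (ln 2 / (ln 2 + c)) (- r - 1)).
  assert (HMb : 0 < Mb) by apply Rpower_gt0.
  unfold log_moment. refine (psum_lt_p_infty _ _ (Mb / Kp * (p * (q + 1))) _).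
  - intros k. apply Rmult_le_pos; [apply (stationary_ge0 p pi Hst)|].
    left; apply Rmult_lt_0_compat; apply Rpower_gt0.
  - intros N. apply Rle_trans with (sum_n (fun j => Mb / Kp * (pi j * wv j)) N).
    + apply sum_n_le_loc. intros j _. rewrite S_INR.
      assert (HX : 1 <= INR j + 1) by (assert (0 <= INR j) by apply pos_INR; lra).
      assert (HR := Rpower_ln_S_le c r (INR j + 1) HX Hc0 Hr). fold Mb in HR.
      assert (Hpi := stationary_ge0 p pi Hst j). assert (HXq := Rpower_gt0 (INR j + 1) q).
      unfold wv.
      replace (Mb / Kp * (pi j * (Kp * (Rpower (INR j + 1) q * Rpower (ln (INR j + 1) + c) (- r - 1)))))
        with (pi j * (Rpower (INR j + 1) q * (Mb * Rpower (ln (INR j + 1) + c) (- r - 1))))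
        by (field; lra).
      apply Rmult_le_compat_l; [auto|]. apply Rmult_le_compat_l; lra.
    + rewrite sum_n_Rscal. apply Rmult_le_compat_l; [apply Rle_mult_inv_pos; lra|apply Hb].
Qed.

Theorem proposition6 (p q : R) (hp : 0 < p <= 1) (hq : 0 < q) :
  (-1 + q + Rpower p q < 0 ->
     positive_recurrent (qbar p) /\
     (exists pi, stationary (qbar p) pi) /\
     (forall pi, stationary (qbar p) pi -> Rbar_lt (moment pi q) p_infty))
  /\
  (forall r : R, Rpower p q = 1 - q -> p < exp (-1) -> 0 < r ->
     positive_recurrent (qbar p) /\
     (exists pi, stationary (qbar p) pi) /\
     (forall pi, stationary (qbar p) pi -> Rbar_lt (log_moment pi q r) p_infty)).
Proof.
  destruct hp as [hp0 hp1].
  assert (p_lt1 : Rpower p q < 1 -> p < 1).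
  { intros H. destruct (Rle_lt_or_eq_dec _ _ hp1) as [|Heq]; [auto|].
    rewrite Heq, Rpower_base_1 in H. lra. }
  split.
  - intros Hsub. assert (Hp1 : p < 1) by (apply p_lt1; lra).
    assert (Hs : q + Rpower p q - 1 < 0) by lra.
    split; [|split].
    + apply (qbar_positive_recurrent p hp0 Hp1 q hq Hs).
    + apply (qbar_stationary_exists p hp0 Hp1 q hq Hs).
    + apply (moment_lt_p_infty p hp0 Hp1 q hq Hs).
  - intros r Hpq _ Hr. assert (Hp1 : p < 1) by (apply p_lt1; lra).
    assert (Hs := half_exponent_subcritical p q (conj hp0 Hp1) hq Hpq).
    assert (Hs0 : 0 < q / 2) by lra.
    split; [|split].
    + apply (qbar_positive_recurrent p hp0 Hp1 (q / 2) Hs0 Hs).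
    + apply (qbar_stationary_exists p hp0 Hp1 (q / 2) Hs0 Hs).
    + intros pi. apply log_moment_lt_p_infty; auto.
Qed.
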